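(* (i) $U=u_1u_2u_1+u_1s_2s_1^{-1}s_2u_1+u_1s_2^{-1}s_1s_2^{-1}u_1+u_1\omega+u_1\omega^{-1}+u_1\omega^{-2}$. (ii) $H_4=U$.
   Context: Let $B_3=\langle s_1,s_2\mid s_1s_2s_1=s_2s_1s_2\rangle$, $R_4=\mathbb{Z}[a,b,c,d,d^{-1}]$, and let $H_4$ be the quotient of the group algebra $R_4B_3$ by the relations $s_i^4=as_i^3+bs_i^2+cs_i+d$ for $i=1,2$; identify $s_i$ with their images in $H_4$. For $i=1,2$ let $u_i$ be the $R_4$-subalgebra of $H_4$ generated by $s_i$. Set $\omega=s_2s_1^2s_2$. For $R_4$-submodules (or elements) $X_1,\dots,X_n$ of $H_4$, $X_1\cdots X_n$ denotes the $R_4$-submodule spanned by all products $x_1\cdots x_n$ with $x_j\in X_j$, and sums are sums of submodules. Define $U'=u_1u_2u_1+u_1s_2s_1^{-1}s_2u_1+u_1s_2^{-1}s_1s_2^{-1}u_1+u_1s_2^{-1}s_1^{-2}s_2^{-1}$ and $U=U'+u_1s_2s_1^{-2}s_2u_1+u_1s_2^{-2}s_1^{-2}s_2^{-2}u_1$. *)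

From HB Require Import structures.
From mathcomp Require Import all_boot all_algebra.
Set Implicit Arguments. Unset Strict Implicit. Unset Printing Implicit Defensive.
Import GRing.Theory.
Local Open Scope ring_scope.

(* R-submodules of an R-algebra A are represented as predicates A -> Prop. *)
Section Submodules.
Variables (R : comUnitRingType) (A : unitAlgType R).

Inductive span (P : A -> Prop) : A -> Prop :=
| span0 : span P 0
| span_in x : P x -> span P x
| spanD x y : span P x -> span P y -> span P (x + y)
| spanZ (r : R) x : span P x -> span P (r *: x).

Definition elt (x : A) : A -> Prop := span (fun z => z = x).

Definition smul (X Y : A -> Prop) : A -> Prop :=
  span (fun z => exists x y, X x /\ Y y /\ z = x * y).

Definition sadd (X Y : A -> Prop) : A -> Prop :=
  span (fun z => X z \/ Y z).

Inductive subalg (g : seq A) : A -> Prop :=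
| subalg_gen x : x \in g -> subalg g x
| subalg1 : subalg g 1
| subalgD x y : subalg g x -> subalg g y -> subalg g (x + y)
| subalgZ (r : R) x : subalg g x -> subalg g (r *: x)
| subalgM x y : subalg g x -> subalg g y -> subalg g (x * y).

Definition seteq (X Y : A -> Prop) : Prop := forall z, X z <-> Y z.

End Submodules.

(* Hypotheses defining (a quotient of) H_4 over a base ring with parameters
   a b c d : the images s1 s2 of the braid generators are units, satisfy the
   braid relation and the quartic relation s^4 = a s^3 + b s^2 + c s + d. *)
Definition H4_rels (R : comUnitRingType) (A : unitAlgType R)
    (a b c d : R) (s1 s2 : A) : Prop :=
  [/\ d \is a GRing.unit, s1 \is a GRing.unit & s2 \is a GRing.unit] /\
  [/\ s1 * s2 * s1 = s2 * s1 * s2,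
      s1 ^+ 4 = a *: s1 ^+ 3 + b *: s1 ^+ 2 + c *: s1 + d%:A &
      s2 ^+ 4 = a *: s2 ^+ 3 + b *: s2 ^+ 2 + c *: s2 + d%:A].

Section UDefs.
Variables (R : comUnitRingType) (A : unitAlgType R) (s1 s2 : A).

Definition u1 : A -> Prop := subalg [:: s1].
Definition u2 : A -> Prop := subalg [:: s2].
Definition omega : A := s2 * s1 ^+ 2 * s2.

Local Notation "X ** Y" := (smul X Y) (at level 40, left associativity).
Local Notation "X :++: Y" := (sadd X Y) (at level 50, left associativity).

Definition U' : A -> Prop :=
  u1 ** u2 ** u1
  :++: u1 ** (elt (s2 * s1^-1 * s2)) ** u1
  :++: u1 ** (elt (s2^-1 * s1 * s2^-1)) ** u1
  :++: u1 ** (elt (s2^-1 * s1 ^- 2 * s2^-1)).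

Definition U : A -> Prop :=
  U'
  :++: u1 ** (elt (s2 * s1 ^- 2 * s2)) ** u1
  :++: u1 ** (elt (s2 ^- 2 * s1 ^- 2 * s2 ^- 2)) ** u1.

Definition U_rhs : A -> Prop :=
  u1 ** u2 ** u1
  :++: u1 ** (elt (s2 * s1^-1 * s2)) ** u1
  :++: u1 ** (elt (s2^-1 * s1 * s2^-1)) ** u1
  :++: u1 ** (elt (omega))
  :++: u1 ** (elt (omega^-1))
  :++: u1 ** (elt (omega ^- 2)).

End UDefs.

From Pilot Require Import Defs.
From HB Require Import structures.
From mathcomp Require Import all_boot all_algebra.
Import GRing.Theory.
Set Implicit Arguments.
Unset Strict Implicit.

(* Both U and the right-hand side of (i) are spans of products of the
   generators, so it suffices to exhibit a finite set V of words in
   s1^{±1}, s2^{±1}, containing the empty word, whose span is stable under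
   right multiplication by the generators (hence is all of H_4) and whose
   elements lie in U and in the right-hand side of (i).  All these
   memberships follow from the same move: if four of the five elements
   p s^j q (0 <= j <= 4, s = s1 or s2) are in a span, so is the fifth,
   by the quartic relation (d being a unit).  The chains of such moves are
   recorded as certificates checked by computation; to recognise words
   that are equal in B_3, a word is rewritten as Delta^(2k) times a product
   of Delta = s1 s2 s1, beta = s1 s2 and beta^2, using beta^3 = Delta^2 and
   the centrality of Delta^2. *)

Section Span.
Variables (R : comUnitRingType) (A : unitAlgType R).
Local Open Scope ring_scope.
Implicit Types (P Q : A -> Prop) (x y : A).

Lemma spanB Q x y : Defs.span Q x -> Defs.span Q y -> Defs.span Q (x - y).
Proof.
by move=> hx hy; apply: Defs.spanD => //; rewrite -scaleN1r; apply: Defs.spanZ.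
Qed.

Lemma span_sub P Q :
  (forall x, P x -> Defs.span Q x) -> forall x, Defs.span P x -> Defs.span Q x.
Proof.
move=> PQ x; elim=> [|y /PQ //|y z _ hy _ hz|r y _ hy].
- exact: Defs.span0.
- exact: Defs.spanD.
- exact: Defs.spanZ.
Qed.

Lemma span_mulr Q x y :
  (forall v, Q v -> Defs.span Q (v * y)) -> Defs.span Q x -> Defs.span Q (x * y).
Proof.
move=> Qy; elim=> [|v /Qy //|v w _ hv _ hw|r v _ hv].
- by rewrite mul0r; apply: Defs.span0.
- by rewrite mulrDl; apply: Defs.spanD.
- by rewrite -scalerAl; apply: Defs.spanZ.
Qed.

Lemma subalg_span Q (G : seq A) :
  Defs.span Q 1 -> (forall v g, Q v -> g \in G -> Defs.span Q (v * g)) ->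
  forall x, subalg G x -> Defs.span Q x.
Proof.
move=> Q1 QG x gx.
suff /(_ 1 Q1) : forall u, Defs.span Q u -> Defs.span Q (u * x) by rewrite mul1r.
elim: gx => {x} [g hg||x y _ hx _ hy|r x _ hx|x y _ hx _ hy] u hu.
- by apply: span_mulr hu => v /QG; apply.
- by rewrite mulr1.
- by rewrite mulrDr; apply: Defs.spanD; [apply: hx | apply: hy].
- by rewrite -scalerAr; apply: Defs.spanZ; apply: hx.
- by rewrite mulrA; apply/hy/hx.
Qed.

Lemma smul_in X Y x y : X x -> Y y -> smul X Y (x * y).
Proof. by move=> hx hy; apply: Defs.span_in; exists x, y. Qed.

Lemma sadd_inl X Y x : X x -> sadd X Y x.
Proof. by move=> h; apply: Defs.span_in; left. Qed.

Lemma sadd_inr X Y x : Y x -> sadd X Y x.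
Proof. by move=> h; apply: Defs.span_in; right. Qed.

Lemma subalg_exp (s : A) n : subalg [:: s] (s ^+ n).
Proof.
elim: n => [|n IH]; first by rewrite expr0; apply: subalg1.
by rewrite exprS; apply: subalgM => //; apply: subalg_gen; rewrite inE.
Qed.

End Span.


Inductive token := Tdelta | Tbeta | Tbeta2.

Definition nat_of_token (t : token) : nat :=
  match t with Tdelta => 0 | Tbeta => 1 | Tbeta2 => 2 end.
Definition token_of_nat (n : nat) : token :=
  match n with 0 => Tdelta | 1 => Tbeta | _ => Tbeta2 end.
Lemma nat_of_tokenK : cancel nat_of_token token_of_nat. Proof. by case. Qed.
HB.instance Definition _ := Equality.copy token (can_type nat_of_tokenK).

(* (k, [:: t_n; ...; t_1]) stands for Delta^(2k) * t_1 * ... * t_n: the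
   token list is reversed, so that right multiplication acts at its head. *)
Definition form := (int * seq token)%type.

Definition form_mul_token (e : form) (t : token) : form :=
  let: (k, s) := e in
  match s, t with
  | Tdelta :: s', Tdelta => ((k + 1)%R, s')
  | Tbeta :: s', Tbeta => (k, Tbeta2 :: s')
  | Tbeta :: s', Tbeta2 | Tbeta2 :: s', Tbeta => ((k + 1)%R, s')
  | Tbeta2 :: s', Tbeta2 => ((k + 1)%R, Tbeta :: s')
  | _, _ => (k, t :: s)
  end.

(* Letters 0, 1, 2, 3 stand for s1, s1^-1, s2, s2^-1; the two tokens of a
   letter multiply to Delta^2 times that letter. *)
Definition letter_tokens (l : nat) : token * token :=
  match l with
  | 0 => (Tbeta2, Tdelta)
  | 1 => (Tdelta, Tbeta)
  | 2 => (Tdelta, Tbeta2)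
  | _ => (Tbeta, Tdelta)
  end.

Definition form_mul_letter (e : form) (l : nat) : form :=
  form_mul_token (form_mul_token ((e.1 - 1)%R, e.2) (letter_tokens l).1)
    (letter_tokens l).2.

Definition form_mul_word (e : form) (w : seq nat) : form := foldl form_mul_letter e w.
Definition form_of_word (w : seq nat) : form := form_mul_word (0%R, [::]) w.

(* (p, l, top, q) asserts, for s the letter l (which must be s1 or s2), that
   p s^4 q (if top) or p q (otherwise) follows from the four other words
   p s^j q, 0 <= j <= 4, already derived. *)
Definition cert_step := (seq nat * nat * bool * seq nat)%type.

Definition cert_line (p : seq nat) (l : nat) (q : seq nat) (j : nat) : form :=
  form_mul_word (form_mul_word (form_of_word p) (nseq j l)) q.
Arguments cert_line : simpl never.

Definition step_result (kn : seq form) (st : cert_step) : option form :=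
  let: (p, l, top, q) := st in
  let line := cert_line p l q in
  let derived js := all (fun j => line j \in kn) js in
  if (l == 0) || (l == 2) then
    if top then (if derived (iota 0 4) then Some (line 4) else None)
    else (if derived (iota 1 4) then Some (line 0) else None)
  else None.

Fixpoint run_steps (kn : seq form) (sts : seq cert_step) : option (seq form) :=
  if sts is st :: sts' then
    if step_result kn st is Some e then run_steps (e :: kn) sts' else None
  else Some kn.

Definition check_cert (basis : seq (seq nat)) (sts : seq cert_step)
    (targets : seq (seq nat)) : bool :=
  if run_steps (map form_of_word basis) sts is Some kn then
    all (fun t => form_of_word t \in kn) targets
  else false.

Section Words.
Variables (R : comUnitRingType) (A : unitAlgType R) (s1 s2 : A).
Local Open Scope ring_scope.

Definition letter (l : nat) : A :=
  match l with 0 => s1 | 1 => s1^-1 | 2 => s2 | _ => s2^-1 end.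

Definition eval_word (w : seq nat) : A := foldl (fun x l => x * letter l) 1 w.

Lemma eval_word_from x w : foldl (fun y l => y * letter l) x w = x * eval_word w.
Proof.
elim: w x => [|l w IH] x /=; first by rewrite mulr1.
by rewrite /eval_word /= (IH (x * letter l)) (IH (1 * letter l)) mul1r mulrA.
Qed.

Lemma eval_word_cons l w : eval_word (l :: w) = letter l * eval_word w.
Proof. by rewrite /eval_word /= eval_word_from mul1r. Qed.

Lemma eval_word_cat u v : eval_word (u ++ v) = eval_word u * eval_word v.
Proof. by rewrite /eval_word foldl_cat eval_word_from. Qed.

Lemma eval_word_rcons w l : eval_word (rcons w l) = eval_word w * letter l.
Proof. by rewrite -cats1 eval_word_cat /eval_word /= mul1r. Qed.

Lemma eval_word_nseq n l : eval_word (nseq n l) = letter l ^+ n.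
Proof.
elim: n => [|n IH]; first by rewrite expr0.
by rewrite -addn1 nseqD eval_word_cat IH exprD expr1 /eval_word /= mul1r.
Qed.

Definition Delta : A := s1 * s2 * s1.
Definition beta : A := s1 * s2.
Definition Delta2 : A := Delta * Delta.

Definition token_val (t : token) : A :=
  match t with Tdelta => Delta | Tbeta => beta | Tbeta2 => beta * beta end.

Definition eval_tokens (s : seq token) : A := foldr (fun t x => x * token_val t) 1 s.
Definition eval_form (e : form) : A := Delta2 ^ e.1 * eval_tokens e.2.

Hypotheses (s1_unit : s1 \is a GRing.unit) (s2_unit : s2 \is a GRing.unit).
Hypothesis braid : s1 * s2 * s1 = s2 * s1 * s2.

Lemma Delta2_unit : Delta2 \is a GRing.unit.
Proof. by rewrite !unitrMl. Qed.

Lemma beta3 : beta * beta * beta = Delta2.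
Proof.
by rewrite /beta /Delta2 {2}/Delta braid /Delta !mulrA.
Qed.

Lemma Delta2_token_comm t : GRing.comm (token_val t) Delta2.
Proof.
rewrite /GRing.comm; case: t => /=; first by rewrite /Delta2 !mulrA.
- by rewrite -beta3 !mulrA.
- by rewrite -beta3 !mulrA.
Qed.

Lemma Delta2_tokens_comm s : GRing.comm (eval_tokens s) Delta2.
Proof.
elim: s => [|t s IH] /=; first exact/commr_sym/commr1.
by apply/commr_sym/commrM; apply/commr_sym; [exact: IH | exact: Delta2_token_comm].
Qed.

Lemma eval_form_succ k s x :
  eval_form (k + 1, s) * x = eval_form (k, s) * (Delta2 * x).
Proof.
rewrite /eval_form /= exprzDr ?Delta2_unit // expr1z.
by rewrite -(mulrA (Delta2 ^ k) Delta2) -(Delta2_tokens_comm s) !mulrA.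
Qed.

Lemma eval_form_cons k t s :
  eval_form (k, t :: s) = eval_form (k, s) * token_val t.
Proof. by rewrite /eval_form /= mulrA. Qed.

Lemma form_mul_tokenE e t : eval_form (form_mul_token e t) = eval_form e * token_val t.
Proof.
case: e => k [|u s]; first by rewrite /eval_form /= mul1r mulr1.
have beta_beta2 : beta * (beta * beta) = Delta2 by rewrite mulrA beta3.
have beta2_beta2 : beta * beta * (beta * beta) = Delta2 * beta by rewrite mulrA beta3.
case: u; case: t; rewrite /= ?eval_form_cons // -[RHS]mulrA //.
- by rewrite -[LHS]mulr1 eval_form_succ mulr1.
- by rewrite -[LHS]mulr1 eval_form_succ mulr1 beta_beta2.
- by rewrite -[LHS]mulr1 eval_form_succ mulr1 beta3.
- by rewrite eval_form_succ beta2_beta2.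
Qed.

Lemma letter_tokensE l :
  token_val (letter_tokens l).1 * token_val (letter_tokens l).2 = Delta2 * letter l.
Proof.
case: l => [|[|[|l]]] /=.
- by rewrite -beta3 /beta /Delta !mulrA.
- by rewrite /Delta2 -mulrA /Delta mulrK.
- by rewrite /Delta2 /Delta /beta !mulrA.
- rewrite -beta3.
  have -> : beta * beta * beta = beta * beta * s1 * s2 by rewrite /beta !mulrA.
  by rewrite mulrK // /Delta /beta !mulrA.
Qed.

Lemma form_mul_letterE e l : eval_form (form_mul_letter e l) = eval_form e * letter l.
Proof.
case: e => k s; rewrite /form_mul_letter !form_mul_tokenE -mulrA letter_tokensE.
by rewrite -eval_form_succ subrK.
Qed.

Lemma form_mul_wordE e w : eval_form (form_mul_word e w) = eval_form e * eval_word w.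
Proof.
elim: w e => [|l w IH] e /=; first by rewrite /eval_word /= mulr1.
by rewrite IH form_mul_letterE eval_word_cons mulrA.
Qed.

Lemma form_of_wordE w : eval_form (form_of_word w) = eval_word w.
Proof. by rewrite form_mul_wordE /eval_form /= mulr1 expr0z mul1r. Qed.

End Words.

Section QuarticSpan.
Variables (R : comUnitRingType) (A : unitAlgType R) (a b c d : R) (Q : A -> Prop).
Local Open Scope ring_scope.
Variables (s p q : A).
Hypothesis quartic : s ^+ 4 = a *: s ^+ 3 + b *: s ^+ 2 + c *: s + d%:A.

Lemma quartic_sandwich :
  p * s ^+ 4 * q = a *: (p * s ^+ 3 * q) + b *: (p * s ^+ 2 * q)
    + c *: (p * s ^+ 1 * q) + d *: (p * q).
Proof.
by rewrite quartic expr1 !mulrDr !mulrDl -!scalerAr -!scalerAl mulr1.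
Qed.

Lemma span_quartic_top :
  (forall j, (j < 4)%N -> Defs.span Q (p * s ^+ j * q)) ->
  Defs.span Q (p * s ^+ 4 * q).
Proof.
move=> lower; rewrite quartic_sandwich.
have -> : p * q = p * s ^+ 0 * q by rewrite expr0 mulr1.
by repeat apply: Defs.spanD; apply: Defs.spanZ; apply: lower.
Qed.

Hypothesis d_unit : d \is a GRing.unit.

Lemma span_quartic_bottom :
  (forall j, (0 < j <= 4)%N -> Defs.span Q (p * s ^+ j * q)) ->
  Defs.span Q (p * q).
Proof.
move=> upper.
have -> : p * q = d^-1 *: (p * s ^+ 4 * q - (a *: (p * s ^+ 3 * q)
    + b *: (p * s ^+ 2 * q) + c *: (p * s ^+ 1 * q))).
  by rewrite quartic_sandwich addrAC subrr add0r scalerA mulVr ?scale1r.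
apply/Defs.spanZ/spanB; first exact: upper.
by repeat apply: Defs.spanD; apply: Defs.spanZ; apply: upper.
Qed.

End QuarticSpan.

Section Certificates.
Variables (R : comUnitRingType) (A : unitAlgType R) (a b c d : R) (s1 s2 : A).
Hypothesis rels : H4_rels a b c d s1 s2.
Variable Q : A -> Prop.
Local Open Scope ring_scope.

Local Notation ev := (eval_word s1 s2).
Local Notation evf := (eval_form s1 s2).

Lemma eval_form_mul_word e w : evf (form_mul_word e w) = evf e * ev w.
Proof. by case: rels => [[_ ? ?] [? _ _]]; apply: form_mul_wordE. Qed.

Lemma eval_form_of_word w : evf (form_of_word w) = ev w.
Proof. by case: rels => [[_ ? ?] [? _ _]]; apply: form_of_wordE. Qed.

Lemma eval_cert_line p l q j :
  evf (cert_line p l q j) = ev p * letter s1 s2 l ^+ j * ev q.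
Proof. by rewrite /cert_line 2!eval_form_mul_word eval_form_of_word eval_word_nseq. Qed.

Definition forms_in_span (kn : seq form) : Prop :=
  forall e, e \in kn -> Defs.span Q (evf e).

Lemma step_result_in_span kn st e :
  forms_in_span kn -> step_result kn st = Some e -> Defs.span Q (evf e).
Proof.
case: st => [[[p l] top] q] kn_span; rewrite /step_result.
case: ifP => // l_s1_or_s2.
have [[d_unit _ _] [_ quartic1 quartic2]] := rels.
have quartic : letter s1 s2 l ^+ 4 = a *: letter s1 s2 l ^+ 3
    + b *: letter s1 s2 l ^+ 2 + c *: letter s1 s2 l + d%:A.
  by case/orP: l_s1_or_s2 => /eqP ->.
have line_in j : cert_line p l q j \in kn ->
    Defs.span Q (ev p * letter s1 s2 l ^+ j * ev q).
  by rewrite -eval_cert_line; apply: kn_span.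
case: top; case: ifP => // /allP derived [<-]; rewrite eval_cert_line.
- apply: span_quartic_top quartic _ => j j_lt4.
  by apply/line_in/derived; rewrite mem_iota.
- rewrite expr0 mulr1; apply: span_quartic_bottom quartic d_unit _ => j j_range.
  by apply/line_in/derived; rewrite mem_iota addnC.
Qed.

Lemma run_steps_in_span kn sts kn' :
  forms_in_span kn -> run_steps kn sts = Some kn' -> forms_in_span kn'.
Proof.
elim: sts kn => [|st sts IH] kn kn_span /=; first by move=> [<-].
case st_res: (step_result kn st) => [e|] // run_res.
apply: IH run_res => f; rewrite inE => /orP [/eqP -> |]; last exact: kn_span.
exact: step_result_in_span st_res.
Qed.

Lemma check_cert_in_span (basis : seq (seq nat)) sts targets :
  (forall w, w \in basis -> Defs.span Q (ev w)) -> check_cert basis sts targets ->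
  forall t, t \in targets -> Defs.span Q (ev t).
Proof.
move=> basis_span; rewrite /check_cert.
case run_res: (run_steps _ _) => [kn|] // /allP targets_in t /targets_in t_in.
have init : forms_in_span (map form_of_word basis).
  by move=> e /mapP [w w_in ->]; rewrite eval_form_of_word; apply: basis_span.
by rewrite -eval_form_of_word; apply: (run_steps_in_span init run_res).
Qed.

End Certificates.

Definition s1_pow (i : nat) : seq nat := nseq i 0.
Definition s2_pow (j : nat) : seq nat := nseq j 2.

Definition u1u2u1_words (js : seq nat) : seq (seq nat) :=
  [seq s1_pow i ++ w | i <- iota 0 4,
                       w <- [seq s2_pow j ++ s1_pow k | j <- js, k <- iota 0 4]].
Definition u1_m_u1_words (m : seq nat) : seq (seq nat) :=
  [seq s1_pow i ++ m ++ s1_pow k | i <- iota 0 4, k <- iota 0 4].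
Definition u1_m_words (m : seq nat) : seq (seq nat) :=
  [seq s1_pow i ++ m | i <- iota 0 4].

Definition words_U : seq (seq nat) :=
  u1u2u1_words (iota 0 4) ++ u1_m_u1_words [:: 2; 1; 2] ++ u1_m_u1_words [:: 3; 0; 3]
  ++ u1_m_words [:: 3; 1; 1; 3] ++ u1_m_u1_words [:: 2; 1; 1; 2]
  ++ u1_m_u1_words [:: 3; 3; 1; 1; 3; 3].
Definition words_Urhs : seq (seq nat) :=
  u1u2u1_words (iota 0 4) ++ u1_m_u1_words [:: 2; 1; 2] ++ u1_m_u1_words [:: 3; 0; 3]
  ++ u1_m_words [:: 2; 0; 0; 2] ++ u1_m_words [:: 3; 1; 1; 3]
  ++ u1_m_words [:: 3; 1; 1; 3; 3; 1; 1; 3].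

Definition Delta2_word : seq nat := [:: 0; 2; 0; 0; 2; 0].
Definition Delta2_inv_word : seq nat := [:: 1; 3; 1; 1; 3; 1].
Definition words_M0 : seq (seq nat) := u1u2u1_words (iota 1 3) ++ map s1_pow (iota 0 4).
Definition words_V : seq (seq nat) :=
  words_M0 ++ [seq Delta2_word ++ w | w <- words_M0]
  ++ [seq Delta2_inv_word ++ w | w <- words_M0]
  ++ [seq Delta2_inv_word ++ Delta2_inv_word ++ s1_pow i | i <- iota 0 4].
Definition right_multiples (ws : seq (seq nat)) : seq (seq nat) :=
  [seq rcons w l | w <- ws, l <- iota 0 4].

Definition steps_U : seq cert_step := [::
([::1],0,false,[::]);
([::3],2,false,[::]);
([::1;1;1],0,false,[::0]);
([::3],2,false,[::0]);
([::0;3],2,false,[::]);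
([::3],2,false,[::0;0]);
([::0;3],2,false,[::0]);
([::0;0;3],2,false,[::]);
([::3],2,false,[::0;0;0]);
([::0;3],2,false,[::0;0]);
([::0],2,true,[::0;0]);
([::0;0;3],2,false,[::0]);
([::1],0,false,[::2]);
([::],0,true,[::2]);
([::3;3;3],2,false,[::2]);
([::2;1],0,false,[::]);
([::3;3;3],2,false,[::]);
([::1],0,false,[::2;0]);
([::],0,true,[::2;0]);
([::3;3;3],2,false,[::2;0]);
([::2;1;1;1],0,false,[::0]);
([::1],0,false,[::2;0;0]);
([::],0,true,[::2;0;0]);
([::3;3;3],2,false,[::2;0;0]);
([::1],0,false,[::2;0;0;0]);
([::],0,true,[::2;0;0;0]);
([::3;3;3],2,false,[::2;0;0;0]);
([::1],0,false,[::2;2]);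
([::],0,true,[::2;2]);
([::2;1;1],0,true,[::2]);
([::2;2;1],0,false,[::]);
([::1],0,false,[::2;2;0]);
([::],0,true,[::2;2;0]);
([::2;1;1],0,true,[::2;0]);
([::2;2;1;1;1],0,false,[::0]);
([::1],0,false,[::2;2;0;0]);
([::2;1;1],0,true,[::2;0;0]);
([::2;1],0,true,[::2;0;0]);
([::2],0,true,[::2;0;0]);
([::1],0,false,[::2;2;0;0;0]);
([::1],0,false,[::2;2;2]);
([::2;2;2;1],0,false,[::]);
([::1],0,false,[::2;2;2;0;0;0]);
([::0;3],2,false,[::0;0;0]);
([::0;0;3],2,false,[::0;0]);
([::0;0;0;3],2,false,[::0]);
([::1;1;1],0,false,[::0;2]);
([::],0,true,[::0;2]);
([::3],2,false,[::0;2]);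
([::],2,true,[::0;2]);
([::0;3;3;3],2,false,[::2]);
([::0;2;1;1],0,false,[::]);
([::],0,true,[::0;2;0]);
([::0;3;3;3],2,false,[::2;0]);
([::],0,true,[::0;2;0;0]);
([::0;3;3;3],2,false,[::2;0;0]);
([::],0,true,[::0;2;0;0;0]);
([::1;1;1],0,false,[::0;2;2]);
([::3],2,true,[::0;2;2]);
([::],2,true,[::0;2;2]);
([::0;2;2;1],0,false,[::]);
([::3],2,true,[::0;2;2;0]);
([::],2,true,[::0;2;2;0]);
([::3;3],2,true,[::0;2;2;0;0]);
([::3],2,true,[::0;2;2;0;0]);
([::],2,true,[::0;2;2;0;0]);
([::0;0;3],2,false,[::0;0;0]);
([::0;0;0;3],2,false,[::0;0]);
([::0;3],2,false,[::0;2]);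
([::0],2,true,[::0;2]);
([::0;0;3;3;3],2,false,[::2]);
([::],2,true,[::0;0;2;0]);
([::0;0;3;3;3],2,false,[::2;0]);
([::],2,true,[::0;0;2;0;0]);
([::0;0;3;3;3],2,false,[::2;0;0]);
([::],2,true,[::0;0;2;0;0;0]);
([::0;3],2,true,[::0;2;2]);
([::0],2,true,[::0;2;2]);
([::0;0;2;2;1],0,false,[::]);
([::0;0;2;2],0,true,[::]);
([::0;3],2,true,[::0;2;2;0]);
([::0],2,true,[::0;2;2;0]);
([::0;3;3],2,true,[::0;2;2;0;0]);
([::0;3],2,true,[::0;2;2;0;0]);
([::0],2,true,[::0;2;2;0;0]);
([::0;0;3],2,false,[::0;2]);
([::0;0],2,true,[::0;2]);
([::0],2,true,[::0;0;2;0]);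
([::0;0],2,true,[::0;2;0]);
([::0],2,true,[::0;0;2;0;0]);
([::0],2,true,[::0;0;2;0;0;0]);
([::0;0;3],2,true,[::0;2;2]);
([::0;0],2,true,[::0;2;2]);
([::0;0;0;2;2;1],0,false,[::]);
([::0;0;3],2,true,[::0;2;2;0]);
([::0;0],2,true,[::0;2;2;0]);
([::0;0;3;3],2,true,[::0;2;2;0;0]);
([::0;0;3],2,true,[::0;2;2;0;0]);
([::0;0],2,true,[::0;2;2;0;0]);
([::0;0;0;2;2;2;1],0,false,[::]);
([::1],0,false,[::2;1;2]);
([::],0,true,[::2;1;2]);
([::],0,true,[::2;1;2;0]);
([::3;3;3;3],2,false,[::2;1;2;0]);
([::3;3;3;3],2,false,[::2;1;2;0;0;0]);
([::2],0,true,[::1;2;0;0;0]);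
([::0;2;1;2;1],0,false,[::]);
([::0;2;1;3;3;3],2,true,[::2;0;0]);
([::0;2;1;3;3],2,true,[::2;0;0]);
([::],2,true,[::0;2;1;2;0;0;0]);
([::0],2,true,[::0;2;1;2;0;0;0]);
([::0;0;0;2;1;2;1],0,false,[::]);
([::1],0,false,[::3;0;3]);
([::3;0;3;1],0,false,[::]);
([::1],0,false,[::3;0;3;0]);
([::3;0;3;1;1;1],0,false,[::0]);
([::1],0,false,[::3;0;3;0;0]);
([::1;1;1],0,false,[::0;3;0;3]);
([::0;3;0;3;1],0,false,[::]);
([::0;3;0;3;1;1;1],0,false,[::0]);
([::0;0;3;0;3;1],0,false,[::]);
([::0;0;3;0;3;1;1;1],0,false,[::0]);
([::0;0;0;3;0;3;1],0,false,[::]);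
([::1],0,false,[::3;1;1;3]);
([::3;1;3;3],2,false,[::1;3]);
([::3;1;1;3;1;1;1],0,false,[::]);
([::0;2;1;1;3;3;3],2,true,[::2;0;0]);
([::0;2;1;1;3;3],2,true,[::2;0;0]);
([::1],0,false,[::3;3;1;1;3;3]);
([::0;3;3;1;1;3;3;1],0,false,[::]);
([::3],2,false,[::1]);
([::1;3],2,false,[::]);
([::1;1],0,false,[::3]);
([::3;1;1],0,false,[::]);
([::3;3],2,false,[::1;1]);
([::1;1;3;3],2,false,[::]);
([::1],0,false,[::3;0]);
([::3;1;1;1;1],0,false,[::0]);
([::0;3;1],0,false,[::]);
([::1],0,false,[::3;0;0]);
([::1;1;1],0,false,[::0;3;0]);
([::0;3;1;1;1],0,false,[::0]);
([::0;3;1;1;1],0,false,[::]);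
([::0;0;3;1],0,false,[::]);
([::1;1;1],0,false,[::0;3;0;0]);
([::3;3],2,true,[::0;2;2;2;2;0;0]);
([::1;3;3;3],2,false,[::2]);
([::1;2;1],0,false,[::]);
([::0;0;3;3],2,true,[::0;0;2]);
([::0;0;3],2,true,[::0;0;2]);
([::0;0],2,true,[::0;0;2]);
([::3;3;1],0,false,[::]);
([::3;3;3;3],2,false,[::2;1]);
([::1;3;3;3],2,false,[::2;0]);
([::0;0],2,true,[::0;0;2;0]);
([::1;1],0,false,[::3;3;0]);
([::1;3;3;3],2,false,[::2;0;0]);
([::0;0],2,true,[::0;0;2;0;0]);
([::1;1],0,false,[::3;3;0;0]);
([::1;3;3],2,false,[::2;0;0;0]);
([::1;3;3],2,false,[::0;0;0]);
([::0;0],2,true,[::0;0;2;0;0;0]);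
([::0;0;0;3],2,true,[::0;2;2]);
([::0;0;0],2,true,[::0;2;2]);
([::3;3;3],2,true,[::2;0;0;2]);
([::3;3],2,true,[::2;0;0;2]);
([::0;0;0;3],2,true,[::0;2;2;0]);
([::0;0;0],2,true,[::0;2;2;0]);
([::],0,true,[::2;0;0;2;0;0]);
([::],0,true,[::2;0;0;0;2;0;0]);
([::],0,true,[::2;0;0;0;0;2;0;0]);
([::0;0;0;0],2,true,[::0;2]);
([::3;1;1;1],0,false,[::0;2]);
([::0;3;1;1;1],0,false,[::3]);
([::0;3;3;1;1],0,false,[::]);
([::0;2;1;3;3;3],2,false,[::1]);
([::0;0;0],2,true,[::0;0;2;0]);
([::0;0;0],2,true,[::0;0;2;0;0]);
([::0;0;0],2,true,[::0;0;2;0;0;0]);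
([::2],0,true,[::2;2;0;2;2]);
([::2;2;1],0,true,[::2;2;0;2;2]);
([::2;2],0,true,[::2;2;0;2;2]);
([::],0,true,[::2;2;0;2;2;0;0]);
([::0;3;1;1;1],0,false,[::0;2]);
([::0;3;1;1;1],0,false,[::2]);
([::],2,true,[::0;2;2;2;2;0;2]);
([::2;2;2],0,true,[::2;0;0;2;0]);
([::3],2,false,[::0;2;2;2;0;2;2]);
([::],2,true,[::0;2;2;2;0;2;2]);
([::0],2,true,[::0;2;2;1]);
([::0],2,true,[::0;2;2;0;0;0;0]);
([::0;2;2;1;1],0,true,[::2;2;0;2;2;0]);
([::0;0;3;1;1],0,false,[::0;2]);
([::0],2,true,[::0;2;2;2;2;0;2]);
([::0;2;2;2],0,true,[::2;0;0;2;0]);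
([::0;3],2,true,[::0;2;2;2;0;2;2]);
([::0],2,true,[::0;2;2;2;0;2;2]);
([::0;0;2;2;1],0,true,[::2;2;0;2;2]);
([::0;0;2;2],0,true,[::2;2;0;2;2]);
([::],0,true,[::2;0;0;0;2;0;0;0]);
([::1],0,false,[::3;0;3;1]);
([::3;3;3;3],2,false,[::1;3;0;3;0]);
([::1;3;0;3;1;1;1],0,false,[::0]);
([::1;1],0,false,[::3;0;3;1;1]);
([::3;3;3;3],2,false,[::1;3;0;3;0;0]);
([::1;1;1],0,false,[::0;3;0;3;1]);
([::0;3;1;1;1;1],0,false,[::0;3;1]);
([::0;3;1;1;1;1],0,false,[::0;3;1;1]);
([::0;0;3],2,false,[::3;0;3;1]);
([::1;1;1],0,false,[::1;3;1;1;3]);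
([::1],0,false,[::3;1]);
([::3;1;3;3],2,false,[::]);
([::3;3],2,false,[::1;3]);
([::1;3;1;1;1],0,false,[::]);
([::1;3;3],2,false,[::1;3]);
([::1;1;3;1;1;1],0,false,[::]);
([::1;1;1],0,false,[::3;1;1]);
([::3;1;1;3;3;3],2,false,[::]);
([::3;1;1;1],0,false,[::3;1;1]);
([::3;3;1;3;3;3;3],2,false,[::1]);
([::1;1;1],0,false,[::3;1;1;1]);
([::1;1;1;1],0,false,[::0;3;1]);
([::0;3;1;1;1;3;3],2,false,[::]);
([::],0,true,[::2;2;0;2;2;2;2;0;0]);
([::3;3;3],2,false,[::1;3;3]);
([::1;3;1;1;1;1],0,false,[::3]);
([::1;3;3;1],0,false,[::]);
([::1;3;3;3;3],2,false,[::2;1]);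
([::0;0;2;2;2],0,true,[::2;0;0;2]);
([::1;1],0,false,[::3;3;1]);
([::3;1;1;1],0,false,[::3;3;1]);
([::0;0;2;2;2],0,true,[::2;0;0;2;0]);
([::1;1;3;3;1;1;1],0,false,[::0]);
([::0;0],2,true,[::0;2;2;2;0;2;2]);
([::0;0;0;2;2],0,true,[::2;2;0;2;2]);
([::0;0;0],2,true,[::0;2;2;2;2;0;2]);
([::0;0;0;2;2;2],0,true,[::2;0;0;2;0]);
([::3;3;3;3],2,false,[::1;3;0;3;1]);
([::1;3],2,false,[::3;0;3;1]);
([::3;1;1;1],0,false,[::3;3;3;1;3;0;3;0]);
([::3;3;1],0,false,[::3;3;1;3;0;3;0]);
([::3;3;3;3;1;3;0;3;1;1;1;1],0,false,[::0]);
([::1;3;3;3;3],2,false,[::1;3;0;3;1;1]);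
([::1;3;3;3;3],2,false,[::1;3;0;3;1]);
([::1;1;1;1],0,false,[::0;3;1;1;1;3;1;1]);
([::1;3;3;3],2,false,[::1;1;3;1;1]);
([::3;1;1;3;3;1;1],0,false,[::3]);
([::3;3;1;3;3;3;1;1],0,false,[::3;1]);
([::1;3;3],2,false,[::1;1;3;1]);
([::1;3;1;1;3;3],2,false,[::1;1;3]);
([::1;3;3;1;1;1],0,false,[::3;1]);
([::3],2,false,[::1;1;1;3;1;1;1;3;1;1]);
([::1;1;1;1],0,false,[::3;1;1;3;3;1;1;3])]%N.

Definition steps_Urhs : seq cert_step := [::
([::1],0,false,[::]);
([::3],2,false,[::]);
([::3],2,false,[::0]);
([::0;3],2,false,[::]);
([::3],2,false,[::0;0]);
([::0;3],2,false,[::0]);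
([::0;0;3],2,false,[::]);
([::3],2,false,[::0;0;0]);
([::0;3],2,false,[::0;0]);
([::0;0;3],2,false,[::0]);
([::1],0,false,[::2]);
([::],0,true,[::2]);
([::3;3;3],2,false,[::2]);
([::2;1],0,false,[::]);
([::1],0,false,[::2;0]);
([::],0,true,[::2;0]);
([::3;3;3],2,false,[::2;0]);
([::1],0,false,[::2;0;0]);
([::],0,true,[::2;0;0]);
([::3;3;3],2,false,[::2;0;0]);
([::1],0,false,[::2;0;0;0]);
([::],0,true,[::2;0;0;0]);
([::3;3;3],2,false,[::2;0;0;0]);
([::1],0,false,[::2;2]);
([::],0,true,[::2;2]);
([::2;2;1],0,false,[::]);
([::1],0,false,[::2;2;0]);
([::],0,true,[::2;2;0]);
([::1],0,false,[::2;2;0;0]);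
([::],0,true,[::2;2;0;0]);
([::2;1],0,true,[::2;0;0]);
([::2],0,true,[::2;0;0]);
([::1],0,false,[::2;2;0;0;0]);
([::],0,true,[::2;2;0;0;0]);
([::1],0,false,[::2;2;2]);
([::2;2;2;1],0,false,[::]);
([::1],0,false,[::2;2;2;0;0;0]);
([::0;3],2,false,[::0;0;0]);
([::0;0;3],2,false,[::0;0]);
([::0;0;0;3],2,false,[::0]);
([::],0,true,[::0;2]);
([::3],2,false,[::0;2]);
([::],2,true,[::0;2]);
([::0;3;3;3],2,false,[::2]);
([::],0,true,[::0;2;0]);
([::0;3;3;3],2,false,[::2;0]);
([::],0,true,[::0;2;0;0]);
([::0;3;3;3],2,false,[::2;0;0]);
([::],0,true,[::0;2;0;0;0]);
([::3],2,true,[::0;2;2]);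
([::],2,true,[::0;2;2]);
([::0;2;2;1],0,false,[::]);
([::3],2,true,[::0;2;2;0]);
([::],2,true,[::0;2;2;0]);
([::1;1;1],0,false,[::0;2;2;0;0]);
([::3],2,true,[::0;2;2;0;0]);
([::],2,true,[::0;2;2;0;0]);
([::0;0;3],2,false,[::0;0;0]);
([::0;0;0;3],2,false,[::0;0]);
([::0;3],2,false,[::0;2]);
([::0],2,true,[::0;2]);
([::0;0;3;3;3],2,false,[::2]);
([::],2,true,[::0;0;2;0]);
([::0;0;3;3;3],2,false,[::2;0]);
([::],2,true,[::0;0;2;0;0]);
([::0;0;3;3;3],2,false,[::2;0;0]);
([::],2,true,[::0;0;2;0;0;0]);
([::0;3],2,true,[::0;2;2]);
([::0],2,true,[::0;2;2]);
([::0;0;2;2;1],0,false,[::]);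
([::0;3],2,true,[::0;2;2;0]);
([::0],2,true,[::0;2;2;0]);
([::0;0;3],2,false,[::0;2]);
([::0;0],2,true,[::0;2]);
([::0],2,true,[::0;0;2;0]);
([::0],2,true,[::0;0;2;0;0]);
([::0;0;3],2,true,[::0;2;2]);
([::0;0],2,true,[::0;2;2]);
([::0;0;0;2;2;1],0,false,[::]);
([::0;0;0;2;2;2;1],0,false,[::]);
([::],0,true,[::2;1;2]);
([::],0,true,[::2;1;2;0]);
([::1],0,false,[::2;1;2;0;0]);
([::],0,true,[::2;1;2;0;0]);
([::2],0,true,[::1;2;0;0;0]);
([::0;2;1;2;1],0,false,[::]);
([::1;1;1],0,false,[::0;2;1;2;0;0]);
([::0;0;2;1;2;1],0,false,[::]);
([::0;0;0;2;1;2;1],0,false,[::]);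
([::1],0,false,[::3;0;3]);
([::3;0;3;1],0,false,[::]);
([::1],0,false,[::3;0;3;0]);
([::1],0,false,[::3;0;3;0;0]);
([::0;3;0;3;1],0,false,[::]);
([::0;0;3;0;3;1],0,false,[::]);
([::0;0;0;3;0;3;1],0,false,[::]);
([::],0,true,[::2;0;0;2]);
([::3;3;3],2,true,[::2;0;0;2]);
([::3;3],2,true,[::2;0;0;2]);
([::],0,true,[::0;2;0;0;2]);
([::0;3;3;3],2,true,[::2;0;0;2]);
([::0;3;3],2,true,[::2;0;0;2]);
([::0;3],2,true,[::2;0;0;2]);
([::],0,true,[::0;0;2;0;0;2]);
([::0;0;3;3;3],2,true,[::2;0;0;2]);
([::0;0;3;3],2,true,[::2;0;0;2]);
([::],0,true,[::0;0;0;2;0;0;2]);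
([::1],0,false,[::3;1;1;3]);
([::3;1;3;3],2,false,[::1;3]);
([::1],0,false,[::3;1;1;3;3;1;1;3]);
([::3;1;3;3],2,false,[::1;3;3;1;1;3]);
([::3;1;1;3;1;1;1],0,false,[::3;1;1;3]);
([::3;1;1;3;3;1;3;3;3;3],2,false,[::1;3]);
([::3],2,false,[::1]);
([::1;3],2,false,[::]);
([::1;1],0,false,[::3]);
([::3;1;1],0,false,[::]);
([::1],0,false,[::3;0]);
([::0;3;1],0,false,[::]);
([::1],0,false,[::3;0;0]);
([::1;1;1],0,false,[::0;3;0]);
([::0;3;1;1;1],0,false,[::0]);
([::0;0;3;1],0,false,[::]);
([::1;1;1],0,false,[::0;3;0;0]);
([::1;3;3;3],2,false,[::2]);
([::0;0;0],2,true,[::0;2]);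
([::3;3;1],0,false,[::]);
([::1;3;3;3],2,false,[::2;0]);
([::0;0;0],2,true,[::0;2;0]);
([::1;3;3;3],2,false,[::2;0;0]);
([::0;0;3;3],2,true,[::0;0;2;0;0]);
([::0;0;3],2,true,[::0;0;2;0;0]);
([::0;0],2,true,[::0;0;2;0;0]);
([::1;3;3],2,false,[::2;0;0;0]);
([::1;3;3],2,false,[::0;0;0]);
([::1;2;0;0;3;3],2,true,[::0]);
([::1;2;0;0;3],2,true,[::0]);
([::0;0;3;3],2,true,[::0;0;2;0;0;0]);
([::0;0;3],2,true,[::0;0;2;0;0;0]);
([::0;0],2,true,[::0;0;2;0;0;0]);
([::0;0;0;3],2,true,[::0;2;2]);
([::0;0;0],2,true,[::0;2;2]);
([::0;0;0;3],2,true,[::0;2;2;0]);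
([::0;0;0],2,true,[::0;2;2;0]);
([::1;2;1],0,true,[::2;0;0]);
([::1;2],0,true,[::2;0;0]);
([::0;0;0;3],2,true,[::0;2;2;0;0]);
([::0;0;0],2,true,[::0;2;2;0;0]);
([::1;1],0,true,[::2;0;0;0;2;0;0]);
([::1;1],0,true,[::2;0;0;0;0;2;0;0]);
([::0;0;0;0],2,true,[::0;2]);
([::3;1;1;1],0,false,[::0;2]);
([::0;0;0],2,true,[::0;0;2;0]);
([::0;0;0],2,true,[::0;0;2;0;0]);
([::0;0;0],2,true,[::0;0;2;0;0;0]);
([::2;1],0,true,[::2;2;0;2;2]);
([::2],0,true,[::2;2;0;2;2]);
([::2;2;1],0,true,[::2;2;0;2;2]);
([::2;2],0,true,[::2;2;0;2;2]);
([::0;3;1;1;1],0,false,[::0;2]);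
([::],2,true,[::0;2;2;2;2;0;2]);
([::2;2;2],0,true,[::2;0;0;2;0]);
([::3;3],2,false,[::0;2;2;2;0;2;2]);
([::3],2,true,[::0;2;2;2;0;2;2]);
([::],2,true,[::0;2;2;2;0;2;2]);
([::0;2;2;1;1],0,false,[::2;2;0;2;2]);
([::0;2;2;1],0,true,[::2;2;0;2;2]);
([::0;2;2],0,true,[::2;2;0;2;2]);
([::0],2,true,[::0;3;0;2]);
([::0;0;3;1;1],0,false,[::0;2]);
([::0],2,true,[::0;2;2;2;2;0;2]);
([::0;2;2;2;1;1],0,true,[::2;0;0;2;0]);
([::0;2;2;2],0,true,[::2;0;0;2;0]);
([::0;3],2,true,[::0;2;2;2;0;2;2]);
([::0],2,true,[::0;2;2;2;0;2;2]);
([::0;0;2;2;1],0,true,[::2;2;0;2;2]);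
([::0;0;2;2],0,true,[::2;2;0;2;2]);
([::],0,true,[::2;0;0;0;2;0;0;0]);
([::1],0,false,[::3;0;3;1]);
([::0;0;3],2,true,[::0;0;0;0;2;0;0;2]);
([::0;0;3],2,true,[::0;0;0;0;0;2;0;0;2]);
([::0;0;0;3;3],2,true,[::0;0;0;0;2;0;0;2]);
([::0;0;0;3],2,true,[::0;0;0;0;2;0;0;2]);
([::1],0,false,[::3;1]);
([::3;1;3;3],2,false,[::]);
([::3;3],2,false,[::1;3]);
([::1;3;3],2,false,[::1;3]);
([::1;3;3;1],0,false,[::]);
([::0;0],2,true,[::0;2;2;2;0;2;2]);
([::0;0;0;2;2],0,true,[::2;2;0;2;2]);
([::0;0;0;2;2;2],0,true,[::2;0;0;2;0])]%N.

Definition steps_V : seq cert_step := [::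
([::1],0,false,[::2]);
([::],0,true,[::2]);
([::3;3;3;3],2,false,[::2]);
([::3],2,true,[::2]);
([::],2,true,[::2]);
([::2;1],0,false,[::]);
([::2],0,true,[::]);
([::1],0,false,[::2;0]);
([::],0,true,[::2;0]);
([::3;3;3;3],2,false,[::2;0]);
([::3],2,true,[::2;0]);
([::],2,true,[::2;0]);
([::2;1;1;1],0,false,[::0]);
([::2],0,true,[::0]);
([::2;1;1;1],0,false,[::]);
([::2;0;3;3],2,false,[::]);
([::1],0,false,[::2;0;0]);
([::],0,true,[::2;0;0]);
([::3;3],2,false,[::2;0;0]);
([::3],2,true,[::2;0;0]);
([::],2,true,[::2;0;0]);
([::3;3;3],2,false,[::0;0]);
([::2;0;3;3],2,false,[::0]);
([::1],0,false,[::2;0;0;0]);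
([::],0,true,[::2;0;0;0]);
([::3;3],2,false,[::2;0;0;0]);
([::3],2,true,[::2;0;0;0]);
([::],2,true,[::2;0;0;0]);
([::3;3],2,false,[::0;0;0]);
([::2;0;3;3],2,false,[::0;0]);
([::1],0,false,[::2;2]);
([::],0,true,[::2;2]);
([::2;2;1],0,false,[::]);
([::2;2],0,true,[::]);
([::1],0,false,[::2;2;0]);
([::],0,true,[::2;2;0]);
([::2;2;1;1;1],0,false,[::0]);
([::2;2;1;1;1],0,false,[::]);
([::1],0,false,[::2;2;0;0]);
([::],0,true,[::2;2;0;0]);
([::1],0,false,[::2;2;0;0;0]);
([::],0,true,[::2;2;0;0;0]);
([::1],0,false,[::2;2;2]);
([::],0,true,[::2;2;2]);
([::2;2;2;1],0,false,[::]);
([::2;2;2],0,true,[::]);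
([::1],0,false,[::2;2;2;0]);
([::],0,true,[::2;2;2;0]);
([::1],0,false,[::2;2;2;0;0]);
([::],0,true,[::2;2;2;0;0]);
([::1],0,false,[::2;2;2;0;0;0]);
([::],0,true,[::2;2;2;0;0;0]);
([::1;1;1],0,false,[::0;2]);
([::],0,true,[::0;2]);
([::3],2,false,[::0;2]);
([::],2,true,[::0;2]);
([::1;1;1],0,false,[::2]);
([::0;3;3;3;3],2,false,[::2]);
([::0;3],2,true,[::2]);
([::0;2;1;1],0,false,[::]);
([::1;1;1;1],0,false,[::0;2;0]);
([::],0,true,[::0;2;0]);
([::3;3;3;3],2,false,[::0;2;0]);
([::],2,true,[::0;2;0]);
([::0;3;3;3;3],2,false,[::2;0]);
([::0;3],2,true,[::2;0]);
([::0],2,true,[::2;0]);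
([::1;1;1;1],0,false,[::0;2;0;0]);
([::],0,true,[::0;2;0;0]);
([::0;3;3],2,false,[::2;0;0]);
([::0;3],2,true,[::2;0;0]);
([::1;1;1;1],0,false,[::0;2;0;0;0]);
([::],0,true,[::0;2;0;0;0]);
([::1;1;1],0,false,[::0;2;2]);
([::],0,true,[::0;2;2]);
([::0;2;2;1],0,false,[::]);
([::0;2;2],0,true,[::]);
([::1;1;1],0,false,[::0;2;2;0]);
([::3],2,false,[::0;2;2;0]);
([::1;1;1],0,false,[::2;2;0]);
([::0;2;1;1],0,false,[::2;0]);
([::0;2;2;1;1;1],0,false,[::0]);
([::0;2;2;1;1;1],0,false,[::]);
([::0;2;2;0;3;3;3],2,false,[::]);
([::1;1;1],0,false,[::0;2;2;0;0]);
([::3],2,false,[::0;2;2;0;0]);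
([::0;2;1;1],0,false,[::2;0;0]);
([::0;2;2;0;3;3;3],2,false,[::0]);
([::1;1;1],0,false,[::0;2;2;0;0;0]);
([::],0,true,[::0;2;2;2]);
([::0;2;2;2;1],0,false,[::]);
([::0;2;2;2],0,true,[::]);
([::1;1;1],0,false,[::0;2;2;2;0]);
([::1;1;1],0,false,[::2;2;2;0]);
([::0;2;2;2;1;1;1],0,false,[::0]);
([::0;2;2;2;1;1;1],0,false,[::]);
([::1;1;1],0,false,[::0;2;2;2;0;0]);
([::1;1;1],0,false,[::0;2;2;2;0;0;0]);
([::],0,true,[::0;0;2]);
([::0;3],2,false,[::0;2]);
([::0],2,true,[::0;2]);
([::0;0;3;3],2,false,[::2]);
([::0;0;3],2,true,[::2]);
([::0;0],2,true,[::2]);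
([::0;0;2;1;1],0,false,[::]);
([::0;0;3;3;3],2,false,[::]);
([::],0,true,[::0;0;2;0]);
([::0;3;3;3;3],2,false,[::0;2;0]);
([::0],2,true,[::0;2;0]);
([::0;0;3;3],2,false,[::2;0]);
([::0;0;3],2,true,[::2;0]);
([::0;0],2,true,[::2;0]);
([::0;0;3;3;3],2,false,[::0]);
([::],0,true,[::0;0;2;0;0]);
([::],0,true,[::0;0;2;0;0;0]);
([::],0,true,[::0;0;2;2]);
([::0;0;2;2;1],0,false,[::]);
([::0;0;2;2],0,true,[::]);
([::0;3],2,false,[::0;2;2;0]);
([::0;0;2;1;1],0,false,[::2;0]);
([::0;0;2;2;1;1;1],0,false,[::0]);
([::0;3],2,false,[::0;2;2;0;0]);
([::0;0;2;1;1],0,false,[::2;0;0]);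
([::],0,true,[::0;0;2;2;2]);
([::0;0;2;2;2;1],0,false,[::]);
([::0;0;2;2;2],0,true,[::]);
([::0;0;2;2;2;1;1;1],0,false,[::0]);
([::0;0;2;2;2;1;1;1],0,false,[::]);
([::0;0;3],2,false,[::0;2]);
([::0;0],2,true,[::0;2]);
([::0;0;0;3;3],2,false,[::2]);
([::0;0;0;3],2,true,[::2]);
([::0;0;0],2,true,[::2]);
([::0;0;0;2;1;1],0,false,[::]);
([::0;0;0;3;3],2,false,[::]);
([::0;0;3;3;3;3],2,false,[::0;2;0]);
([::0;0],2,true,[::0;2;0]);
([::0;0;0;2;2;1],0,false,[::]);
([::0;0;0;2;2],0,true,[::]);
([::0;0;3],2,false,[::0;2;2;0]);
([::0;0;0;2;1;1],0,false,[::2;0]);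
([::0;0;0;2;2;1;1;1],0,false,[::0]);
([::0;0;3],2,false,[::0;2;2;0;0]);
([::0;0;0;2;2;2;1],0,false,[::]);
([::0;0;0;2;2;2],0,true,[::]);
([::0;0;0;2;2;2;1;1;1],0,false,[::0]);
([::1],0,false,[::]);
([::],0,true,[::]);
([::1;1;1],0,false,[::0]);
([::],0,true,[::0]);
([::1;1;1],0,false,[::]);
([::],0,true,[::0;0]);
([::3;3;3],2,false,[::0;0;0]);
([::1],0,false,[::0;2;0;0;2;0;2]);
([::],0,true,[::0;2;0;0;2;0;2]);
([::3],2,true,[::0;2;0;0;2;0;2]);
([::1],0,false,[::2;0;0;2;0;2]);
([::0;2;0;3;3;3],2,false,[::0;2;0;2]);
([::0;2;0;0;3],2,false,[::2;0;2]);
([::0;2;0;0],2,true,[::2;0;2]);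
([::0;2;0;0;2;1;1;1;1],0,false,[::0;2]);
([::0;2;0;0;3],2,false,[::0;2]);
([::0;2;0;0;2;0;2;1;1;1],0,false,[::]);
([::1],0,false,[::0;2;0;0;2;0;2;0]);
([::],0,true,[::0;2;0;0;2;0;2;0]);
([::1],0,false,[::2;0;0;2;0;2;0]);
([::0;2;0;3;3;3],2,false,[::0;2;0;2;0]);
([::0;2;0;0;2;1;1;1;1],0,false,[::0;2;0]);
([::1],0,false,[::0;2;0;0;2;0;2;0;0]);
([::],0,true,[::0;2;0;0;2;0;2;0;0]);
([::3;3;3;3],2,false,[::0;2;0;0;2;0;2;0;0]);
([::1],0,false,[::2;0;0;2;0;2;0;0]);
([::0;2;0;3;3;3],2,false,[::0;2;0;2;0;0]);
([::0;2;0;0;2;1;1;1;1],0,false,[::0;2;0;0]);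
([::1],0,false,[::0;2;0;0;2;0;2;0;0;0]);
([::],0,true,[::0;2;0;0;2;0;2;0;0;0]);
([::3;3;3;3],2,false,[::0;2;0;0;2;0;2;0;0;0]);
([::1],0,false,[::2;0;0;2;0;2;0;0;0]);
([::1],0,false,[::0;2;0;0;2;0;2;2]);
([::],0,true,[::0;2;0;0;2;0;2;2]);
([::1],0,false,[::2;0;0;2;0;2;2]);
([::0;2;0;3;3;3],2,false,[::0;2;0;2;2]);
([::0;2;0;0;2;0;2;2;1],0,false,[::]);
([::0;2;0;0;2;0;2;2],0,true,[::]);
([::1],0,false,[::0;2;0;0;2;0;2;2;0]);
([::],0,true,[::0;2;0;0;2;0;2;2;0]);
([::1],0,false,[::2;0;0;2;0;2;2;0]);
([::0;2;0;3;3;3],2,false,[::0;2;0;2;2;0]);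
([::0;2;0;0;2;0;2;2;1;1;1],0,false,[::0]);
([::1],0,false,[::0;2;0;0;2;0;2;2;0;0]);
([::],0,true,[::0;2;0;0;2;0;2;2;0;0]);
([::1],0,false,[::2;0;0;2;0;2;2;0;0]);
([::0;2;0;3;3;3],2,false,[::0;2;0;2;2;0;0]);
([::1],0,false,[::0;2;0;0;2;0;2;2;0;0;0]);
([::],0,true,[::0;2;0;0;2;0;2;2;0;0;0]);
([::1],0,false,[::2;0;0;2;0;2;2;0;0;0]);
([::0;2;0;3;3;3],2,false,[::0;2;0;2;2;0;0;0]);
([::1],0,false,[::0;2;0;0;2;0;2;2;2]);
([::],0,true,[::0;2;0;0;2;0;2;2;2]);
([::1],0,false,[::2;0;0;2;0;2;2;2]);
([::0;2;0;3;3;3],2,false,[::0;2;0;2;2;2]);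
([::0;2;0;0;2;0;2;2;2;1],0,false,[::]);
([::0;2;0;0;2;0;2;2;2],0,true,[::]);
([::1],0,false,[::0;2;0;0;2;0;2;2;2;0]);
([::],0,true,[::0;2;0;0;2;0;2;2;2;0]);
([::1],0,false,[::2;0;0;2;0;2;2;2;0]);
([::0;2;0;0;2;0;2;2;2;1;1;1],0,false,[::0]);
([::1],0,false,[::0;2;0;0;2;0;2;2;2;0;0]);
([::],0,true,[::0;2;0;0;2;0;2;2;2;0;0]);
([::1],0,false,[::2;0;0;2;0;2;2;2;0;0]);
([::1],0,false,[::0;2;0;0;2;0;2;2;2;0;0;0]);
([::],0,true,[::0;2;0;0;2;0;2;2;2;0;0;0]);
([::1],0,false,[::2;0;0;2;0;2;2;2;0;0;0]);
([::],0,true,[::0;2;0;0;2;0;0;2]);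
([::3],2,false,[::0;2;0;0;2;0;0;2]);
([::],2,true,[::0;2;0;0;2;0;0;2]);
([::0;3],2,true,[::2;0;0;2;0;0;2]);
([::0;2;1;1],0,false,[::0;0;2;0;0;2]);
([::],0,true,[::0;2;0;0;2;0;0;2;0]);
([::],0,true,[::0;2;0;0;2;0;0;2;0;0]);
([::0;3;3;3;3],2,false,[::2;0;0;2;0;0;2;0;0]);
([::0;2;0;0;2;0;0;2;2;1],0,false,[::]);
([::0;2;0;0;2;0;0;2;2],0,true,[::]);
([::0;2;0;0;2;0;0;2;2;1;1;1],0,false,[::0]);
([::0;2;0;0;2;0;0;2;2;1;1;1],0,false,[::]);
([::0;2;0;0;2;0;0;2;2;2;1],0,false,[::]);
([::0;2;0;0;2;0;0;2;2;2],0,true,[::]);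
([::0;3],2,false,[::2;0;0;2;0;0;0;2]);
([::0],2,true,[::2;0;0;2;0;0;0;2]);
([::0;3],2,false,[::0;0;2;0;0;0;2]);
([::0;2;0;0;2;0;0;0;3],2,true,[::2]);
([::0;2;0;0;2;0;0;0;2;2;1],0,false,[::]);
([::0;2;0;0;2;0;0;0;2;2],0,true,[::]);
([::0;2;0;0;2;0;0;0;2;2;1;1;1],0,false,[::0]);
([::0;2;0;0;2;0;0;0;2;2;2;1],0,false,[::]);
([::0;2;0;0;2;0;0;0;2;2;2],0,true,[::]);
([::0;2;0;0;2;0;0;0;2;2;2;1;1;1],0,false,[::0]);
([::0;2;0;0;2;0;0;0;3],2,false,[::0;2]);
([::0;2;0;0;2;0;0;0],2,true,[::0;2]);
([::0;2;0;0;2;0;0;0;0;3;3;3;3],2,false,[::2]);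
([::0;2;0;0;2;0;0;0;0;3],2,true,[::2]);
([::0;2;0;0;2;0;0;0;0;2;1;1],0,false,[::]);
([::0;2;0;0;2;0;0;0;0;2;2;1],0,false,[::]);
([::0;2;0;0;2;0;0;0;0;2;2],0,true,[::]);
([::0;2;0;0;2;0;0;0;0;2;2;1;1;1],0,false,[::0]);
([::0;2;0;0;2;0;0;0;0;2;2;2;1],0,false,[::]);
([::0;2;0;0;2;0;0;0;0;2;2;2],0,true,[::]);
([::1],0,false,[::0;2;0;0;2;0]);
([::],0,true,[::0;2;0;0;2;0]);
([::1],0,false,[::2;0;0;2;0]);
([::0;3;3;3],2,false,[::2;0;0;2;0]);
([::0;3;3;3],2,false,[::0;0;2;0]);
([::0;2;0;3;3;3],2,false,[::0;2;0]);
([::0;2;0;0;3;3;3],2,false,[::2;0]);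
([::0;2;0;0;2;1;1;1;1],0,false,[::0]);
([::0;2;0;0;3;3;3],2,false,[::0]);
([::0;2;0;0;3;3;3],2,false,[::2;0;0]);
([::0;2;0;0;3;3;3],2,false,[::0;0]);
([::3;3;3;3],2,false,[::0;2;0;0;2;0;0;0]);
([::0;2;0;0;3;3;3],2,false,[::2;0;0;0]);
([::3;3;3;3],2,false,[::0;2;0;0;2;0;0;0;0]);
([::0;3;3;3;3],2,false,[::2;0;0;2;0;0;0;0]);
([::0;2;0;0;2;0;0;0;0;3;3;3;3],2,false,[::]);
([::1],0,false,[::1;3;1;1;3;1;2]);
([::],0,true,[::1;3;1;1;3;1;2]);
([::3;3],2,false,[::1;3;1;1;3;1;2]);
([::3],2,true,[::1;3;1;1;3;1;2]);
([::1;1;1],0,false,[::3;1;1;3;1;2]);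
([::1;3],2,false,[::3;1;1;3;1;2]);
([::1],2,true,[::3;1;1;3;1;2]);
([::1;3;3;3],2,false,[::1;1;3;1;2]);
([::1],0,false,[::1;3;1;1;3;1;2;0]);
([::],0,true,[::1;3;1;1;3;1;2;0]);
([::3;3],2,false,[::1;3;1;1;3;1;2;0]);
([::3],2,true,[::1;3;1;1;3;1;2;0]);
([::],2,true,[::1;3;1;1;3;1;2;0]);
([::1;1;1],0,false,[::3;1;1;3;1;2;0]);
([::1],2,true,[::3;1;1;3;1;2;0]);
([::1;3;1;1;1],0,false,[::1;1;3;1;2;0]);
([::1;3;1;3;3;3],2,false,[::1;3;1;2;0]);
([::1],0,false,[::1;3;1;1;3;1;2;0;0]);
([::3;3],2,false,[::1;3;1;1;3;1;2;0;0]);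
([::3],2,true,[::1;3;1;1;3;1;2;0;0]);
([::1;1;1],0,false,[::3;1;1;3;1;2;0;0]);
([::1;3;1;1;3;1;2;0;0;3],2,false,[::]);
([::1],0,false,[::1;3;1;1;3;1;2;0;0;0]);
([::3;3],2,false,[::1;3;1;1;3;1;2;0;0;0]);
([::3],2,true,[::1;3;1;1;3;1;2;0;0;0]);
([::1;1;1],0,false,[::3;1;1;3;1;2;0;0;0]);
([::1;3;1;1;3;1;2;0;0;3],2,false,[::0]);
([::1],0,false,[::1;3;1;1;3;1;2;2]);
([::],0,true,[::1;3;1;1;3;1;2;2]);
([::1;1;1],0,false,[::3;1;1;3;1;2;2]);
([::1;3;1;1;3;1;2;2;1],0,false,[::]);
([::1;3;1;1;3;1;2;2],0,true,[::]);
([::1;1],0,false,[::1;3;1;1;3;1;2;2;0]);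
([::],2,true,[::1;3;1;1;3;1;2;2;0]);
([::1;1;1;1],0,false,[::3;1;1;3;1;2;2;0]);
([::1;3],2,false,[::3;1;1;3;1;2;2;0]);
([::1;3;1;1;3;1;2;2;1;1;1],0,false,[::0]);
([::1;1],0,false,[::1;3;1;1;3;1;2;2;0;0]);
([::],0,true,[::1;3;1;1;3;1;2;2;0;0]);
([::1;3],2,false,[::3;1;1;3;1;2;2;0;0]);
([::1],0,false,[::1;3;1;1;3;1;2;2;0;0;0]);
([::1;1;1],0,false,[::3;1;1;3;1;2;2;0;0;0]);
([::1],0,false,[::1;3;1;1;3;1;2;2;2]);
([::],0,true,[::1;3;1;1;3;1;2;2;2]);
([::1;1;1],0,false,[::3;1;1;3;1;2;2;2]);
([::1;3;1;1;3;1;2;2;2;1],0,false,[::]);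
([::1;3;1;1;3;1;2;2;2],0,true,[::]);
([::1],0,false,[::1;3;1;1;3;1;2;2;2;0]);
([::],0,true,[::1;3;1;1;3;1;2;2;2;0]);
([::1;1;1],0,false,[::3;1;1;3;1;2;2;2;0]);
([::1;3;1;1;3;1;2;2;2],0,true,[::0]);
([::1],0,false,[::1;3;1;1;3;1;2;2;2;0;0]);
([::],0,true,[::1;3;1;1;3;1;2;2;2;0;0]);
([::1;1;1],0,false,[::3;1;1;3;1;2;2;2;0;0]);
([::1],0,false,[::1;3;1;1;3;1;2;2;2;0;0;0]);
([::],0,true,[::1;3;1;1;3;1;2;2;2;0;0;0]);
([::1;1;1],0,false,[::3;1;1;3;1;2;2;2;0;0;0]);
([::],0,true,[::1;3;1;1;3;1;0;2]);
([::3],2,false,[::1;3;1;1;3;1;0;2]);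
([::],2,true,[::1;3;1;1;3;1;0;2]);
([::1;3;1;1],0,false,[::1;1;3;1;0;2]);
([::1;3;1;1;3;3],2,false,[::3;1;0;2]);
([::1;3;1;1;3],2,true,[::3;1;0;2]);
([::1;3;1;1;3;3;3;3],2,false,[::1;0;2]);
([::],0,true,[::1;3;1;1;3;1;0;2;0]);
([::],2,true,[::1;3;1;1;3;1;0;2;0]);
([::1;3;1;1;3;3],2,false,[::3;1;0;2;0]);
([::1;3;1;1;3],2,true,[::3;1;0;2;0]);
([::1;3;1;1],2,true,[::3;1;0;2;0]);
([::1;3;1;1;3;3;3;3],2,false,[::1;0;2;0]);
([::],2,true,[::1;3;1;1;3;1;0;2;0;0]);
([::1;3;1;1;3;3],2,false,[::3;1;0;2;0;0]);
([::1;3;1;1;3],2,true,[::3;1;0;2;0;0]);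
([::1;3;1;1;3;3;3;3],2,false,[::1;0;2;0;0]);
([::],0,true,[::1;3;1;1;3;1;0;2;0;0;0]);
([::],2,true,[::1;3;1;1;3;1;0;2;0;0;0]);
([::],0,true,[::1;3;1;1;3;1;0;2;2]);
([::3],2,false,[::1;3;1;1;3;1;0;2;2]);
([::1;3;1;1],0,false,[::1;1;3;1;0;2;2]);
([::1;3;1;1;2;1],0,false,[::]);
([::],0,true,[::1;3;1;1;3;1;0;2;2;0]);
([::1;3;1;1;2;1;1;1],0,false,[::0]);
([::1;3;1;1;2],0,true,[::0]);
([::],0,true,[::1;3;1;1;3;1;0;2;2;0;0]);
([::],0,true,[::1;3;1;1;3;1;0;2;2;2]);
([::1;3;1;1;2;2;1],0,false,[::]);
([::1;3;1;1;2;2],0,true,[::]);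
([::],0,true,[::1;3;1;1;3;1;0;2;2;2;0]);
([::1;3;1;1;2;2;1;1;1],0,false,[::0]);
([::1;3;1;1;2;2],0,true,[::0]);
([::3],2,false,[::1;3;1;1;3;1;0;2;2;2;0;0]);
([::],2,true,[::1;3;1;1;3;1;0;2;2;2;0;0]);
([::1;3;1;1;2;1],0,false,[::2;0;0]);
([::1;3;1;1;2],0,true,[::2;0;0]);
([::3],2,false,[::1;3;1;1;3;1;0;2;2;2;0;0;0]);
([::],2,true,[::1;3;1;1;3;1;0;2;2;2;0;0;0]);
([::1;3;1;1;2;1],0,false,[::2;0;0;0]);
([::1;3;1;1;2],0,true,[::2;0;0;0]);
([::],0,true,[::1;3;1;1;3;1;0;0;2]);
([::3;3],2,false,[::1;3;1;1;3;1;0;0;2]);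
([::1;3;1;1;3],2,false,[::3;1;0;0;2]);
([::1;3;1;1;3;3;3],2,false,[::1;0;0;2]);
([::1;3;1;1;3;3;3;3],2,false,[::0;2]);
([::1;3;1;1;3;0;3;3],2,false,[::2]);
([::1;3;1;1;3;0;3],2,true,[::2]);
([::1;3;1;1;3;0],2,true,[::2]);
([::1;3;1;1;3;0;3;3],2,false,[::]);
([::],0,true,[::1;3;1;1;3;1;0;0;2;0]);
([::1;3;1;1;3;0;3;3],2,false,[::2;0]);
([::1;3;1;1;3;0;3],2,true,[::2;0]);
([::1;3;1;1;3;0],2,true,[::2;0]);
([::1;3;1;1;3;0;3;3],2,false,[::0]);
([::],0,true,[::1;3;1;1;3;1;0;0;2;0;0]);
([::1;3;1;1],2,true,[::3;1;0;0;2;0;0]);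
([::],0,true,[::1;3;1;1;3;1;0;0;2;0;0;0]);
([::1;3;1;1],2,true,[::3;1;0;0;2;0;0;0]);
([::1;3;1;1;3],2,false,[::3;1;0;0;2;2]);
([::1;3;1;1;3;3;3],2,false,[::1;0;0;2;2]);
([::1;3;1;1;3;0;2;2;1],0,false,[::]);
([::1;3;1;1;3;0;2;2],0,true,[::]);
([::],0,true,[::1;3;1;1;3;1;0;0;2;2;0]);
([::1;3;1;1;3;0;2;2;1;1;1],0,false,[::0]);
([::1;3;1;1;3;0;2;2],0,true,[::0]);
([::1;3;1;1;3;0;2;2;1;1;1],0,false,[::]);
([::1;3;1;1;3;0;2;2;2;1],0,false,[::]);
([::1;3;1;1;3;0;2;2;2],0,true,[::]);
([::1;3;1;1;3],2,false,[::3;1;0;0;2;2;2;0]);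
([::1;3;1;1],2,true,[::3;1;0;0;2;2;2;0]);
([::1;3;1;1;3;0;2;2;1],0,false,[::2;0]);
([::1;3;1;1;3;0;2;2],0,true,[::2;0]);
([::1;3;1;1;3;0;2;2;2;1;1;1],0,false,[::0]);
([::1;3;1;1;3;0;2;2;2;1;1;1],0,false,[::]);
([::1;3;1;1;3],2,false,[::3;1;0;0;2;2;2;0;0]);
([::1;3;1;1],2,true,[::3;1;0;0;2;2;2;0;0]);
([::1;3;1;1;3;0;2;2;1],0,false,[::2;0;0]);
([::1;3;1;1;3;0;2;2],0,true,[::2;0;0]);
([::1;3;1;1;3;3],2,false,[::3;1;0;0;0;2]);
([::1;3;1;1;3;0;3],2,false,[::0;2]);
([::1;3;1;1;3;0;0;3;3],2,false,[::2]);
([::1;3;1;1;3;0;0;3],2,true,[::2]);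
([::1;3;1;1;3;0;0;2;1;1],0,false,[::]);
([::],0,true,[::1;3;1;1;3;1;0;0;0;2;0]);
([::1;3;1;1;3;0;3;3;3;3],2,false,[::0;2;0]);
([::1;3;1;1;3;0],2,true,[::0;2;0]);
([::],0,true,[::1;3;1;1;3;1;0;0;0;2;0;0]);
([::1;3;1;1;3;0],2,true,[::0;2;0;0]);
([::],2,true,[::1;3;1;1;3;1;0;0;0;2;0;0;0]);
([::1;3;1;1;3;0;0;2;0;0;0],2,true,[::]);
([::1;3;1;1;3;0;3],2,false,[::0;2;2]);
([::1;3;1;1;3;0;0;2;1;1],0,false,[::2]);
([::1;3;1;1;3;0;0;2;2;1],0,false,[::]);
([::1;3;1;1;3;0;0;2;2],0,true,[::]);
([::1;3;1;1;3],2,true,[::3;1;0;0;0;2;2;0]);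
([::1;3;1;1],2,true,[::3;1;0;0;0;2;2;0]);
([::1;3;1;1;3;0;0;2;2;1;1;1],0,false,[::0]);
([::1;3;1;1;3;0;0;2;2;1;1;1],0,false,[::]);
([::1;3;1;1;3],2,true,[::3;1;0;0;0;2;2;0;0]);
([::1;3;1;1;3;0;3],2,false,[::0;2;2;2]);
([::1;3;1;1;3;0],2,true,[::0;2;2;2]);
([::1;3;1;1;3;0;0;2;2;2;1],0,false,[::]);
([::1;3;1;1;3;0;0;2;2;2],0,true,[::]);
([::1;3;1;1;3;0;3],2,false,[::0;2;2;2;0]);
([::1;3;1;1;3;0],2,true,[::0;2;2;2;0]);
([::1;3;1;1;3;0;0;2;2;2;1;1;1],0,false,[::0]);
([::1;3;1;1;3;0;0;2;2;2;1;1;1],0,false,[::]);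
([::1;3;1;1;3;0],2,true,[::0;2;2;2;0;0]);
([::1],0,false,[::1;3;1;1;3;1]);
([::],0,true,[::1;3;1;1;3;1]);
([::1;1;1],0,false,[::3;1;1;3;1]);
([::1;3],2,false,[::3;1;1;3;1]);
([::1],2,true,[::3;1;1;3;1]);
([::1;3;3;3],2,false,[::1;1;3;1]);
([::1;3;1;3;3;3],2,false,[::1;3;1]);
([::1;3;1;1;3],2,false,[::3;1]);
([::1;3;1;1],2,true,[::3;1]);
([::1;3;1;1;3;1;1;1;1],0,false,[::1]);
([::1;3;1;1;3;3;3],2,false,[::1]);
([::],0,true,[::1;3;1;1;3;1;0]);
([::1;3],2,false,[::3;1;1;3;1;0]);
([::1],2,true,[::3;1;1;3;1;0]);
([::1;3;3;3],2,false,[::1;1;3;1;0]);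
([::],0,true,[::1;3;1;1;3;1;0;0]);
([::1;3],2,false,[::3;1;1;3;1;0;0]);
([::1],0,false,[::1;3;1;1;3;1;1;3;1;1;3;1]);
([::],0,true,[::1;3;1;1;3;1;1;3;1;1;3;1]);
([::],0,true,[::1;3;1;1;3;1;1;3;1;1;3;1;0]);
([::1;1;1],0,false,[::1;2]);
([::1;3],2,true,[::2]);
([::1;2;1],0,false,[::]);
([::1;2],0,true,[::]);
([::0;0;3;3],2,false,[::0;0;2]);
([::0;0;0;3],2,false,[::0;2]);
([::0;0;0],2,true,[::0;2]);
([::0;0;0;0;3],2,true,[::2]);
([::0;0;0;0;2;1;1],0,false,[::]);
([::3;3;3;1;1;1],0,false,[::]);
([::1;1],0,false,[::2;2;2;2]);
([::2;2;2;2;1],0,false,[::]);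
([::2;2;2;2;2;1],0,false,[::]);
([::1;1],0,false,[::2;1]);
([::2;1;1;1],0,false,[::1]);
([::1;1],0,false,[::2;0;0;0;0]);
([::1;1;1],0,false,[::1;2;0]);
([::1;3],2,true,[::2;0]);
([::1],2,true,[::2;0]);
([::1;2;1;1;1],0,false,[::0]);
([::1;2],0,true,[::0]);
([::1;2;1;1;1],0,false,[::]);
([::0;3;3;3],2,false,[::0;0;0;2;0]);
([::0;3;3],2,true,[::0;0;0;2;0]);
([::0;3],2,true,[::0;0;0;2;0]);
([::0],2,true,[::0;0;0;2;0]);
([::0;0;3;3],2,false,[::0;0;2;0]);
([::0;0;0;3;3;3;3],2,false,[::0;2;0]);
([::0;0;0],2,true,[::0;2;0]);
([::0;0;0;0;3],2,true,[::2;0]);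
([::0;0;0;0],2,true,[::2;0]);
([::1;1],0,false,[::3;3;3;0]);
([::3;1;1;1],0,false,[::3;3;0]);
([::3;3;1;1],0,true,[::3;0]);
([::1],0,true,[::2;2;2;2;0]);
([::1;1],0,false,[::2;2;2;2;2;0]);
([::1],0,true,[::2;2;2;2;2;0]);
([::2;0;0;3],2,false,[::0;0;0]);
([::1;3],2,true,[::2;0;0]);
([::1;2;0;0;3;3],2,false,[::]);
([::0;3;3;3],2,false,[::0;0;0;2;0;0]);
([::0;3;3],2,true,[::0;0;0;2;0;0]);
([::0;3],2,true,[::0;0;0;2;0;0]);
([::1;1;1],0,false,[::3;0;0]);
([::1;1],0,true,[::3;0;0]);
([::1],0,true,[::3;0;0]);
([::3;0],2,true,[::0]);
([::2;2;2;1],0,true,[::2;0;0]);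
([::2;2;2],0,true,[::2;0;0]);
([::2;0;3;1;1;1;1],0,false,[::3;0]);
([::2;0;3;1],0,true,[::3;0]);
([::2;0;3;3;0;3;3],2,false,[::]);
([::1;2;0;0;3;3],2,false,[::0]);
([::1;1],0,true,[::3;0;0;0]);
([::1],0,true,[::3;0;0;0]);
([::3;0],2,true,[::0;0]);
([::3;0;0;3],2,true,[::0]);
([::3;0;0],2,true,[::0]);
([::3;1;1;1],0,false,[::3;0;0;0]);
([::3;1;1],0,true,[::3;0;0;0]);
([::3;3;0;3],2,true,[::0;0]);
([::3;3;0],2,true,[::0;0]);
([::1;2;2;1],0,false,[::]);
([::0;0;0;3],2,false,[::0;2;2]);
([::0;0;0;0;2;1;1],0,false,[::2]);
([::0;0;0;0;2;2;1],0,false,[::]);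
([::1;1],0,false,[::2;2;1]);
([::1;2;1],0,false,[::2;0]);
([::1;2;2;1;1;1],0,false,[::0]);
([::1;2;2;0;3;3],2,false,[::]);
([::1;1],0,false,[::2;2;1;1]);
([::1;2;1],0,false,[::2;0;0]);
([::0;0;0;3],2,false,[::0;2;2;0;0]);
([::1;2;2;2;1],0,false,[::]);
([::0;0;0;0;2;2;2;1],0,false,[::]);
([::1;1],0,false,[::2;2;2;1]);
([::0;0;0;0;2;2;2;1;1;1],0,false,[::0]);
([::0;0;0;3;3],2,false,[::0;0;2]);
([::0;0;0;0;3],2,false,[::0;2]);
([::0;0;0;0],2,true,[::0;2]);
([::0;0;0;0;0;2;1;1],0,false,[::]);
([::3;3;3],2,false,[::3;0;2]);
([::3;1],0,true,[::0;2]);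
([::2;2;1;1],0,true,[::2;2;0;2]);
([::2;2;1],0,true,[::2;2;0;2]);
([::2;2],0,true,[::2;2;0;2]);
([::1;1;1;3;3;3;3],2,false,[::2]);
([::0;3;1;1;1],0,false,[::3;3]);
([::0;3;1;1],0,true,[::3;3]);
([::0;3;1],0,true,[::3;3]);
([::0;3;3;1;1],0,true,[::3]);
([::0;2;2;2;2;1;1],0,false,[::]);
([::0;2;2;2;2;1],0,true,[::]);
([::0;2;2;2;2],0,true,[::]);
([::1;1;3;3;3],2,false,[::1;2;0]);
([::1;1;3;3],2,true,[::1;2;0]);
([::1;1;3],2,true,[::1;2;0]);
([::1;1],2,true,[::1;2;0]);
([::1;1;1;3],2,true,[::2;0]);
([::0;0;0;0],2,true,[::0;2;0]);
([::3;1],0,true,[::3;3;3;0;2;0]);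
([::2;2;1;1],0,true,[::2;2;0;2;0]);
([::2;2;1],0,true,[::2;2;0;2;0]);
([::2;2;2],0,true,[::2;0;2;0]);
([::3;3],2,false,[::0;2;2;2;2;0]);
([::0;2;2;2;1],0,false,[::2;0]);
([::1;1;3;3;3],2,false,[::1;2;0;0]);
([::1;1;3;3],2,true,[::1;2;0;0]);
([::0;3;0],2,true,[::0]);
([::0;3;0;0;3],2,true,[::]);
([::1;1;1],0,true,[::0;2;2;2;2;0;0]);
([::1;1],0,true,[::0;2;2;2;2;0;0]);
([::0;2;2;2;1],0,false,[::2;0;0]);
([::0;2;2;2],0,true,[::2;0;0]);
([::3],2,false,[::0;2;2;1]);
([::0;2;1;1],0,false,[::2;1]);
([::0;2;2;1;1;1],0,false,[::1]);
([::0;2;2;1;1;1;1;1],0,false,[::]);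
([::3;3;3],2,false,[::0;2;2;0;0;0;0]);
([::1],0,false,[::3;0;2;2;0]);
([::3;0;2;2;1],0,false,[::0]);
([::3;0;2;2;1;1],0,false,[::]);
([::1],0,false,[::0;2;1;1;2;0]);
([::0;2;1;1;3;3;3],2,true,[::2;0]);
([::0;2;1;1;2;1],0,false,[::0]);
([::1;1;2;1],0,false,[::2;0;0;0]);
([::1;1;2;2;1],0,true,[::2;0;0]);
([::0;0;0;0;0;3],2,false,[::0;2]);
([::0;0;0;0;0;0;3;3],2,false,[::2]);
([::0;3;3;3],2,false,[::3;0;2]);
([::0;3;1],0,true,[::0;2]);
([::0;3;3;3;3;3],2,false,[::0;2]);
([::3;3;3;3],2,false,[::0;2;2;2;2;0;2]);
([::0;2;2;1],0,true,[::2;2;0;2]);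
([::0;2;2],0,true,[::2;2;0;2]);
([::0;0;3;1;1;1],0,false,[::]);
([::0;0;3;3;3;3],2,false,[::2;1;1]);
([::0;2;2;2],0,true,[::2;0;2;0]);
([::0;0;3;0;3;3],2,false,[::]);
([::0;0;3;0;3],2,true,[::]);
([::0;0;3;0],2,true,[::]);
([::0;3],2,false,[::0;2;2;1]);
([::0;3;1;1],0,true,[::0;2;2;0]);
([::0;3;1],0,true,[::0;2;2;0]);
([::0;3;0;2;2;1;1;1],0,false,[::0]);
([::0;3;0;2;2;1;1;1],0,false,[::]);
([::0;0;3;3;3;3],2,false,[::2;1;1;2;0]);
([::0;0;3;3;3],2,true,[::2;1;1;2;0]);
([::0;0;3;3],2,true,[::2;1;1;2;0]);
([::0;3;1;1],0,true,[::0;2;2;0;0]);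
([::0;3;0;3;3;3;3],2,false,[::2;2;0;0]);
([::0;3;0;3;3;3],2,true,[::2;2;0;0]);
([::0;3;0;3;3],2,true,[::2;2;0;0]);
([::0;0;2;2;2;1;3;3;3],2,true,[::]);
([::0;0;2;2;2;1;3;3],2,true,[::]);
([::0;0;3;1;1;1;1],0,false,[::0;2]);
([::0;0;2;2;1;1],0,true,[::2;2;0;2]);
([::0;0;2;2;1],0,true,[::2;2;0;2]);
([::0;0;2;2],0,true,[::2;2;0;2]);
([::0;0;2;2;2;1;1],0,true,[::2;0;2]);
([::0],2,true,[::0;0;3]);
([::0;0;0;2;1;3;3;3],2,false,[::1]);
([::0;0;0;2;1;3;3],2,true,[::1]);
([::0;0;0;2;1;1;3;3;3],2,true,[::]);
([::0;0;0;2;1;1;3;3],2,true,[::]);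
([::0;0;0;3;1;1;1],0,false,[::3]);
([::0;0;0;3;1;1],0,true,[::3]);
([::0;0;0;3;1],0,true,[::3]);
([::0;0;2;2;2;1;1],0,true,[::2;0;2;0]);
([::0;0;2;2;2;1],0,true,[::2;0;2;0]);
([::0;0;2;2;2],0,true,[::2;0;2;0]);
([::0;0;2;2;2;2;1;1],0,true,[::0;2;0]);
([::0;0;3;1;1;1;1],0,false,[::0;2;2;0]);
([::0;0;3;1;1;1],0,true,[::0;2;2;0]);
([::0;0;3;1;1],0,true,[::0;2;2;0]);
([::0;0;3;1],0,true,[::0;2;2;0]);
([::0;0;3;0;3;3;3],2,true,[::2;2;0]);
([::0;0;3;0;3;3],2,true,[::2;2;0]);
([::0;0;3;0;2;2;1;1;1],0,false,[::0]);
([::0;0;3;1;1;1],0,true,[::0;2;2;0;0]);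
([::0;0;3;1;1],0,true,[::0;2;2;0;0]);
([::0;0;3],2,true,[::0;2;2;2;1]);
([::0;0],2,true,[::0;2;2;2;1]);
([::1;3;3;3],2,false,[::1]);
([::1;3;3;3],2,false,[::1;1]);
([::1;1;3;3;3],2,false,[::1]);
([::2;1],0,true,[::0;0;2;0;2]);
([::2;0;0;3],2,false,[::2;0;2]);
([::2;0;0;3],2,false,[::0;2]);
([::2;0;0;2;0;2;1;1;1],0,false,[::]);
([::0;0;0;3],2,false,[::0;0;2;0;0;2;0;2]);
([::0;0;0;0;0;2;0;0;3;3],2,false,[::2;0;2]);
([::1;1],0,false,[::2;2;2;0;2;0;0;2;0;2]);
([::1;2;0;0;3],2,false,[::2;0;2]);
([::1;2;0;0;3],2,false,[::0;2]);
([::0;2;0;3;3;3;1],0,true,[::0;2;0;2]);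
([::0;2;0;0;3;3;3],2,false,[::0;2]);
([::0;2;0;3;3;1;1;1],0,false,[::3;0;2;0;2;0]);
([::3;1;1;1;1],0,false,[::3;3;3;0;2;0;0;2;0;2;0;0]);
([::3;3;1;1;1;1],0,false,[::3;3;0;2;0;0;2;0;2;0;0]);
([::3;3;1;1;1],0,true,[::3;3;0;2;0;0;2;0;2;0;0]);
([::3;3;1;1],0,true,[::3;3;0;2;0;0;2;0;2;0;0]);
([::3;3;3;3],2,false,[::2;0;0;2;0;2;0;0;0]);
([::3;1;1;1;1],0,false,[::3;3;3;0;2;0;0;2;0;2;0;0;0]);
([::3;3;1;1;1;1],0,false,[::3;3;0;2;0;0;2;0;2;0;0;0]);
([::3;3;1;1;1],0,true,[::3;3;0;2;0;0;2;0;2;0;0;0]);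
([::3;3;1;1],0,true,[::3;3;0;2;0;0;2;0;2;0;0;0]);
([::2;0;0;2;0;2;2;1],0,false,[::]);
([::2;0;0;2;0;2;2],0,true,[::]);
([::0;0;0;0;0;2;0;0;2;0;2;2;1],0,false,[::]);
([::1;2;0;0;2;0;2;2;1],0,false,[::]);
([::0;2;0;3;3;3;0;2;0;2;2;1],0,false,[::]);
([::2;0;0;2;0;2;2;1;1;1],0,false,[::0]);
([::1;2;0;0;2;0;2;2;1;1;1],0,false,[::0]);
([::0;2;0;3;3;3;0;2;0;2;2;1;1;1],0,false,[::0]);
([::3;3;3;3],2,false,[::2;0;0;2;0;2;2;0;0;0]);
([::3;3;3],2,true,[::2;0;0;2;0;2;2;0;0;0]);
([::2;0;0;2;0;2;2;2;1],0,false,[::]);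
([::0;0;0;0;0;2;0;0;2;0;2;2;2;1],0,false,[::]);
([::1;2;0;0;2;0;2;2;2;1],0,false,[::]);
([::2;0;0;2;0;2;2;2;1;1;1],0,false,[::0]);
([::0;3;3;1;1;1;1],0,false,[::3;0;0;2;0;0;2;0;0]);
([::0;3;3;1;1;1],0,true,[::3;0;0;2;0;0;2;0;0]);
([::0;3;3;1;1],0,true,[::3;0;0;2;0;0;2;0;0]);
([::0;0;0;2;0;0;0;3;3;3],2,true,[::2]);
([::0;3;0;3;3;3;3],2,false,[::0;2;0;0;0;2]);
([::0;2;0;0;2;0;0;0;3;0;3;3;3;3],2,false,[::2]);
([::0;2;0;0;2;0;0;0;0;3;1;1;1;1],0,false,[::3;3]);
([::0;2;0;0;2;0;0;0;0;3;1;1;1],0,true,[::3;3]);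
([::0;2;0;0;2;0;0;0;0;3;1;1],0,true,[::3;3]);
([::0;2;0;0;2;0;0;0;0;3;1],0,true,[::3;3]);
([::0;2;0;0;2;0;0;0;0;3;3;1;1;1],0,true,[::3]);
([::0;2;0;0;2;0;0;0;0;3;3;3;1;1;1],0,false,[::]);
([::0;2;0;0;2;0;0;0;0;2;2;1;3;3;3;3],2,false,[::]);
([::0;2;0;0;2;0;0;0;0;2;2;1;3;3;3],2,true,[::]);
([::0;2;0;0;2;0;0;0;0;2;2;2;1;3;3;3],2,true,[::]);
([::1;3;3;3],2,false,[::2;0;0;2;0]);
([::1;3;3;3],2,false,[::0;0;2;0]);
([::1;1;1],0,false,[::0;3;3;0;0;2;0]);
([::1],0,true,[::0;3;3;0;0;2;0]);
([::1;1;1],0,false,[::3;3;0;0;2;0]);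
([::0;3;3;0;3;3;3;3],2,false,[::0;2;0]);
([::1;1;1],0,false,[::0;3;3;3;0;0;2;0]);
([::1],0,true,[::0;3;3;3;0;0;2;0]);
([::1;1;1],0,false,[::3;3;3;0;0;2;0]);
([::0;2;0;3;1;1;1],0,false,[::3;3;0;2;0]);
([::0;2;0;3],0,true,[::3;3;0;2;0]);
([::0;2;0;0;3;3;1;1;1;1],0,false,[::0]);
([::0;2;0;0;3;3;1],0,true,[::0]);
([::3;3;3],2,false,[::0;2;0;0;2;1;1;1]);
([::0;2;1;1;1;1],0,false,[::0;0;2;1;1;1]);
([::0;2;0;0;3;3;3;3],2,false,[::2;1;1;1]);
([::0;2;0;0;2;1;3;3;3],2,false,[::1;1]);
([::0;2;0;0;3;3;3;1;1;1],0,false,[::0]);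
([::3;1;1;1],0,true,[::3;3;3;0;2;0;0;2;0;0;0]);
([::3;3;3;1;1;1],0,false,[::3;0;2;0;0;2;0;0;0]);
([::3;3;3],2,true,[::0;2;0;0;3;3;0;0;0]);
([::0;2;0;0;3;1;1;1],0,true,[::3;0;0;0]);
([::3;1;1;1],0,true,[::3;3;3;0;2;0;0;2;0;0;0;0]);
([::0;3;3;3;1;1;1],0,true,[::0;0;2;0;0;0;0]);
([::1;3;3],2,false,[::1;3;1;1;3;1;2]);
([::1;1;3],2,false,[::3;1;1;3;1;2]);
([::1;1;3;1;1;1],0,false,[::1;1;3;1;2]);
([::0;3;3],2,false,[::0;0;3;1;1;3;1;2]);
([::0;3],2,true,[::0;0;3;1;1;3;1;2]);
([::0;0;0;3;1;1],0,false,[::1;1;3;1;2]);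
([::0;0;0;3;1],0,true,[::1;1;3;1;2]);
([::1;1],0,false,[::3;3;1;3;1;1;3;1;2]);
([::3;1],0,false,[::3;1;3;1;1;3;1;2]);
([::3],0,true,[::3;1;3;1;1;3;1;2]);
([::3;3;1;3;3],2,false,[::3;1;1;3;1;2]);
([::3;3;1;3;3;3;3],2,false,[::1;1;3;1;2]);
([::3;3;1;3;1;1;3;1;2;1;1;1;1],0,false,[::]);
([::2;2;2;1;3],2,false,[::3;1;1;3;1;2]);
([::1;1;3;3;3],2,false,[::1;3;1;1;3;1;2]);
([::1;1;1;3],2,false,[::3;1;1;3;1;2]);
([::1;1;1;3;3;3],2,false,[::1;1;3;1;2]);
([::3;3;3],2,false,[::1;3;3;1;1;3;1;2]);
([::1;2;2;1;1],0,false,[::2;1;1;3;1;2]);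
([::1],2,true,[::1;3;1;1;3;1;2;0]);
([::0;3;3],2,false,[::0;0;3;1;1;3;1;2;0]);
([::0;3],2,true,[::0;0;3;1;1;3;1;2;0]);
([::0],2,true,[::0;0;3;1;1;3;1;2;0]);
([::1;1],0,false,[::3;3;1;3;1;1;3;1;2;0]);
([::1],0,true,[::3;3;1;3;1;1;3;1;2;0]);
([::1;1],0,false,[::2;2;2;1;3;1;1;3;1;2;0]);
([::1],0,true,[::2;2;2;1;3;1;1;3;1;2;0]);
([::2;1],0,false,[::2;2;1;3;1;1;3;1;2;0]);
([::1;2;2;1;1],0,false,[::2;1;1;3;1;2;0]);
([::1;2;2;1],0,true,[::2;1;1;3;1;2;0]);
([::2;1],0,false,[::2;2;1;3;1;1;3;1;2;0;0]);
([::1;3;3],2,false,[::1;1;3;1;1;3;1;2;0;0]);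
([::1;1;3;3],2,false,[::1;3;1;1;3;1;2;0;0]);
([::1;1;3],2,true,[::1;3;1;1;3;1;2;0;0]);
([::1;1;1;3;1;1;1],0,false,[::1;1;3;1;2;0;0]);
([::1;3;1;1;3;1;2;0;0;3;1;1],0,false,[::]);
([::1;1;3;1;1;3;1;2;0;0;0;3;3],2,false,[::]);
([::1;3;3],2,false,[::1;1;3;1;1;3;1;2;0;0;0]);
([::1;3;1;1;3;1;2;0;0;3;0;3;3],2,false,[::]);
([::1;3;1;1;3;1;2;0;0;3;0;3],2,true,[::]);
([::1;3;1;1;3;1;2;0;0;3;0],2,true,[::]);
([::0;0;0;3;3],2,false,[::3;1;1;3;1;2;2]);
([::1;1;1;3;1;1;3;1;2;2;1],0,false,[::]);
([::1;3;3],2,false,[::3;1;1;3;1;2;2;1]);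
([::1;1;1;3;1;1;3;1;2;2;1;1;1],0,false,[::0]);
([::1;3;3;1;1;1],0,true,[::1;1;3;1;2;2;0]);
([::0;0;0;3;1;1],0,true,[::1;1;3;1;2;2;0;0]);
([::0;0;0;3;1;1;3;1;2;2;0;0;3],2,true,[::]);
([::1;1;3;1;1;3;1;2;2;0;0;3],2,true,[::0]);
([::1;1;3],2,false,[::3;1;1;3;1;2;2;2]);
([::1;1],2,true,[::3;1;1;3;1;2;2;2]);
([::1;1;3;1;1;3;1;2;2;1],0,false,[::2]);
([::1;1;3;1;1;3;1;2;2],0,true,[::2]);
([::1;1;3;1;1;3;1;2;2;2;1],0,false,[::]);
([::0;0;0;3],2,false,[::3;1;1;3;1;2;2;2]);
([::0;0;0],2,true,[::3;1;1;3;1;2;2;2]);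
([::0;0;0;3;1;1;3;1;2;2;1],0,false,[::2]);
([::0;0;0;3;1;1;3;1;2;2],0,true,[::2]);
([::0;0;0;3;1;1;3;1;2;2;2;1],0,false,[::]);
([::1;1;1;3;1;1;3;1;2;2;2;1],0,false,[::]);
([::1;3],2,false,[::3;1;1;3;1;2;2;2;1]);
([::1],2,true,[::3;1;1;3;1;2;2;2;1]);
([::1;3;1;1;3;1;2;2;1],0,false,[::2;1]);
([::1;3;1;1;3;1;2;2],0,true,[::2;1]);
([::1;1;3;3],2,false,[::3;1;1;3;1;2;2;2;0]);
([::1;1;3;1;1;3;1;2;2;1],0,false,[::2;0]);
([::0;0;0;3;1;1;3;1;2;2;1],0,false,[::2;0]);
([::1;1;1;3],2,false,[::3;1;1;3;1;2;2;2;0]);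
([::1;1;1],2,true,[::3;1;1;3;1;2;2;2;0]);
([::1;1;1;3;1;1;3;1;2;2;2;1;1;1],0,false,[::0]);
([::1;1],2,true,[::3;1;1;3;1;2;2;2;0;0;0]);
([::0;0;3;3],2,false,[::0;3;1;1]);
([::0;0;3],2,true,[::0;3;1;1]);
([::0;0;0;3;1;1;3;3],2,false,[::]);
([::3],0,true,[::1;3;1;1]);
([::2;2;1;1],0,false,[::2;2;1;3;1;1]);
([::2;2;1],0,true,[::2;2;1;3;1;1]);
([::2;2],0,true,[::2;2;1;3;1;1]);
([::1;3;1;1;3;3],2,false,[::1;1]);
([::1;3;1;1;3],2,true,[::1;1]);
([::1;3;1;1;3;3;1],0,true,[::]);
([::1;3;1;1;2;2],0,true,[::2]);
([::1;3;1;1;3;3;3;1;1],0,false,[::]);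
([::3],2,false,[::1;3;1;1;3;3;0]);
([::],2,true,[::1;3;1;1;3;3;0]);
([::1;3;1;1;3;3;0;3],2,false,[::]);
([::1;3;1;1;3;3;0],2,true,[::]);
([::3],2,false,[::1;3;1;1;2;2;2;0]);
([::],2,true,[::1;3;1;1;2;2;2;0]);
([::1;3;1;1;2;2;1],0,false,[::2;0]);
([::1;3;1;1;2;2],0,true,[::2;0]);
([::3],2,false,[::1;3;1;1;2;2;2;2;0]);
([::],2,true,[::1;3;1;1;2;2;2;2;0]);
([::1;3;1;1],0,false,[::1;1;2;2;2;2;0]);
([::1;3;1;1;2;2;2;1],0,false,[::2;0]);
([::1;3;1;1;2;2;2],0,true,[::2;0]);
([::1;3;1;1;3;3;1;1],0,true,[::3;0]);
([::1;3;1;1;3;3;3;1;1;1;1],0,false,[::0]);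
([::1;1;1],0,true,[::1;3;1;1;3;3;0;0]);
([::1;1],0,true,[::1;3;1;1;3;3;0;0]);
([::1;1;1],0,true,[::1;3;1;1;2;2;2;0;0]);
([::1;1],0,true,[::1;3;1;1;2;2;2;0;0]);
([::0;3],2,true,[::0;0;3;0]);
([::0;0;0;3],2,true,[::3;1;1;2]);
([::0;0;0],2,true,[::3;1;1;2]);
([::1],0,false,[::1;3;1;1;1;1;2]);
([::0;0;0;3;1;1;2;0;0;3],2,true,[::]);
([::0;0;0;3],0,true,[::1;1;2;2]);
([::3],2,false,[::1;3;1;1;2;2;1]);
([::],2,true,[::1;3;1;1;2;2;1]);
([::1;3;1;1;2;1],0,false,[::2;1]);
([::0;0;0;3;1;1;2;1],0,false,[::2;0]);
([::3],2,false,[::1;3;1;1;2;2;1;1]);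
([::1;3;1;1;2;1],0,false,[::2;1;1]);
([::3],2,false,[::1;3;1;1;2;2;0;0;0;0;0]);
([::],2,true,[::1;3;1;1;2;2;0;0;0;0;0]);
([::3;1;1;1],0,true,[::1;3;1;1;2;2;0;0]);
([::3;1;3;1;1;2;2;1],0,false,[::0;0]);
([::3;1;3;1;1;2;2;1],0,false,[::0]);
([::1],0,false,[::2;2;2;2;1;3;1;1;2;2;0;0]);
([::2;2;2;2;1;3;1;1;2;2;1],0,false,[::0;0]);
([::2;2;2;2;1;3;1;1;2;2;1],0,false,[::0]);
([::1;3;1;1;2;1;2;1],0,false,[::0;0]);
([::1;3;1;1;2;0;0;0;3],2,false,[::0;2;0;0]);
([::1;3;1;1;2;0;0;0;0;2;1;1],0,false,[::0;0]);
([::3;1;3;1;1;3;3;3],2,true,[::2;2;0;0;0]);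
([::1;3;1;1;3;3;3;3],2,false,[::2;1;2;0;0;0]);
([::0;0;0;3],2,true,[::3;1;1;3;0;2]);
([::1;1],0,false,[::3;3;1;3;1;1;3;0;2]);
([::3;3;1;1;1],0,false,[::1;3;1;1;3;0;2]);
([::3;3;1;1],0,true,[::1;3;1;1;3;0;2]);
([::3;3;1],0,true,[::1;3;1;1;3;0;2]);
([::1;3;1;1;3;3;1;1],0,false,[::0;2]);
([::1;3;1;1;3;3;1],0,true,[::0;2]);
([::1;3;1;1;3;3],0,true,[::0;2]);
([::1;3;1;1;3;3;1;1],0,false,[::2]);
([::1;3;1;1;3;3;0],2,true,[::2]);
([::1;3;1;1;3;3;3;1;1],0,false,[::0;2]);
([::1;3;1;1;3;3;1;1],0,false,[::3;3;0;2]);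
([::1;3;1;1;3;0;3;1],0,true,[::]);
([::1;3;1;1;3;0;2;2;2;2;1],0,true,[::]);
([::1;3;1;1;3],2,true,[::3;0;2;2;2;2;2]);
([::1;3;1;1;3;0;3;1;1],0,true,[::3]);
([::0;0;3;3],2,false,[::0;3;1;1;3;0;2;0;0]);
([::0;0;3],2,true,[::0;3;1;1;3;0;2;0;0]);
([::0;0],2,true,[::0;3;1;1;3;0;2;0;0]);
([::3],2,true,[::1;3;1;1;3;0;2;2;1]);
([::1;3;1;1;3;0;2;2;0;0;3],2,true,[::0;0]);
([::0;0;0;3;1],0,true,[::1;1;3;0;2;2;0]);
([::0;0;0;3],0,true,[::1;1;3;0;2;2;0]);
([::1;3;1;1;3;0;2;2;1],0,false,[::2;1]);
([::1;3;1;1;3;0;2;2],0,true,[::2;1]);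
([::1;3;1;1;3;3;1;1;1],0,true,[::0;2;2;2;0]);
([::1;3;1;1;3;3;1;1],0,true,[::0;2;2;2;0]);
([::1;1],0,false,[::1;3;1;1;2;2;2;0;2;2;2;0]);
([::1;3;1;1;2;2;2;0;2;2;2;1;1;1],0,false,[::0]);
([::1;1],0,false,[::1;3;1;1;3;0;2;2;1;2;0]);
([::1;3;1;1;3;0;2;2;1;3;3],2,true,[::2;0]);
([::1;3;1;1;3;0;2;2;1;2;1],0,false,[::0]);
([::1;3;1;1;3;0;2;2;0;0;0;3],2,false,[::0;2;0]);
([::1;3;1;1;3;0;2;2;0;0;0;0;2;1;1;1],0,false,[::0]);
([::1;3;1;1;3;0;2;2;1],0,false,[::2;1;1;1]);
([::1;3;1;1;3;0;3;3;3;3],2,false,[::2;2;1;2;0;0]);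
([::1;3;1;1;3;0;3;1;1],0,false,[::0;2]);
([::1;3;1;1;3;0;3;1;1],0,false,[::2]);
([::1;3;1;1;3;0;0;3;1;1],0,false,[::]);
([::1;3;1;1;3;0;0;2;1;3;3],2,false,[::1]);
([::0;0;0;3],2,true,[::3;1;1;3;0;0;2;0]);
([::0;0;0],2,true,[::3;1;1;3;0;0;2;0]);
([::0;0;0;3],0,true,[::1;1;3;0;0;2;0]);
([::1;3;1;1;3;0;3;1;1],0,false,[::3;3;3;0;2;0]);
([::1;3;1;1;3;0;2;2;2],0,true,[::2;0;2;0]);
([::0;0;0;3],2,true,[::3;1;1;3;0;0;2;0;0]);
([::0;0;0],2,true,[::3;1;1;3;0;0;2;0;0]);
([::1],0,false,[::2;2;2;2;1;3;1;1;3;0;0;2;0;0;0]);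
([::1;3;1;1;3;0;0;2;0;0;0;2;2;2;2;1],0,false,[::]);
([::1;3;1;1;3],2,true,[::3;0;0;2;2;1]);
([::1;3;1;1;3;0;0;2;2;1;3;3],2,true,[::]);
([::1],0,false,[::1;3;1;1;2;2;0;0;2;2;0]);
([::1;1;1],0,false,[::3;1;1;2;2;0;0;2;2;0]);
([::1;3;1;1;2;2;0;0;3;3;3],2,true,[::2;2;0]);
([::1;3;1;1;2;2;0;0;2;2;1],0,false,[::0]);
([::1;3;1;1;2;2;0;0;2;2;1;1],0,false,[::]);
([::1],0,false,[::1;3;1;1;2;2;2;0;0;2;2;0]);
([::1;3;1;1;3],2,true,[::3;0;0;2;2;1;1;1]);
([::1;1;1],0,false,[::1;3;1;1;3;0;3;0;2;2;2]);
([::1;1;1],0,false,[::1;3;1;1;3;0;2;2;2;2;0;2;2;2]);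
([::1;3;1;1;3;0;0;2;2;1],0,false,[::2;1]);
([::1;3],2,false,[::1;1;3;1;1;3;1]);
([::1;1;1;3;1;1;3;3],2,false,[::3;1]);
([::3;3;3],2,false,[::1;3;3;1;1;3;1]);
([::3],2,true,[::1;3;3;1;1;3;1]);
([::1;3;3;1],0,false,[::1;1;3;1]);
([::1;3;3],0,true,[::1;1;3;1]);
([::3;3],2,true,[::1;3;3;3;1;1;3;1]);
([::1;3;1;3;3;1],0,false,[::3;1;3;1]);
([::1;1;1;1],0,false,[::1;3;1;1;3;3;1]);
([::3],2,true,[::1;3;1;1;3;3;1]);
([::3],2,true,[::1;3;1;1;2;2;2;1]);
([::],2,true,[::1;3;1;1;2;2;2;1]);
([::1;3;1;1;2;2],0,true,[::2;1]);
([::1;3;1;1;3;1;1;1;3],2,false,[::1;1]);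
([::1],0,true,[::1;3;1;1;3;3;3;1]);
([::1;3;1;1;3;3;1;1;1],0,false,[::3;1]);
([::1;3;1;1;3;3;1;1],0,true,[::3;1]);
([::3;3],2,true,[::1;3;3;3;1;1;3]);
([::1;3;3;1;1;3],2,true,[::3;0]);
([::1;3;3;1;1],2,true,[::3;0]);
([::0;0],2,true,[::0;3;1;1;3;1;1;3;1;1;3]);
([::0;0;0],2,true,[::3;1;1;3;1;1;3;1;1;3]);
([::1;1;3;3;3],2,false,[::1;1;2]);
([::1;1;3;3],2,true,[::1;1;2]);
([::0;3;3],2,true,[::0;0;3;0;2]);
([::0;3],2,true,[::0;0;3;0;2]);
([::0;0;0;2;2;1;1],0,true,[::2;2;0;2]);
([::0;0;0;2;2;1],0,true,[::2;2;0;2]);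
([::0;0;0;2;2],0,true,[::2;2;0;2]);
([::0;3;3],2,true,[::0;0;0;2;1;1]);
([::3;1;1;1],0,false,[::3;3;1;1;1]);
([::2;1;1;3;3;3],2,false,[::1;1]);
([::1;1;3;3;3;3],2,false,[::1;1;2;0]);
([::1;1;1;3],2,true,[::1;2;0]);
([::1;2;0;0;0;3;3],2,true,[::0;0]);
([::1;2;0;0;0;0;0;3;3],2,true,[::]);
([::1;2;1;1;1;3;3;3],2,true,[::]);
([::1],0,false,[::0;3;3;3;0;0;0;2;0]);
([::1],0,false,[::3;3;3;0;0;0;2;0]);
([::0;3;1;1;1],0,true,[::3;3;0;0;0;2;0]);
([::0;3;1;1],0,true,[::3;3;0;0;0;2;0]);
([::0;3;3;3;0;0;3],2,false,[::0;2;0]);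
([::0;0;0;3;3;1;1],0,true,[::3;3;0;2;0]);
([::3;3;3],2,false,[::0;0;0;2;2;2;2;0;2;0]);
([::3;3],2,true,[::0;0;0;2;2;2;2;0;2;0]);
([::0;0;0;2;2;2;1;1],0,true,[::2;0;2;0]);
([::0;0;0;2;2;2;1],0,true,[::2;0;2;0]);
([::0;0;0;2;2;2],0,true,[::2;0;2;0]);
([::0;0;0;0;2;2;2;1],0,true,[::2;0]);
([::0;0;0;0;2;2;2;2;1],0,true,[::2;0]);
([::3;1;1;1;3;3;1;1;1],0,false,[::0]);
([::3;3;3],2,false,[::2;0;0;3;0;0;0]);
([::1;2;2;2;1],0,true,[::2;0;0]);
([::1;2;0;0;3;3;1;1],0,false,[::]);
([::1],0,true,[::0;2;2;0;0;0;2;0;0]);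
([::1;1;1;3;0;0;3],2,true,[::]);
([::0;0;0;3;0;0;3],2,true,[::]);
([::3;0;2;2;2;2;1;1],0,false,[::0]);
([::3;0;2;2;2;2;1;1],0,false,[::]);
([::0;0;3;0;0],2,true,[::0]);
([::0;0;0;3;0;0;3],2,true,[::0]);
([::0;0;0;3;0;0;0;3],2,true,[::]);
([::3;0;0;2;2;2;1;1;1;1],0,false,[::0]);
([::3;1;1;1;3;0;3],2,true,[::0;0]);
([::3;1;1;1],0,true,[::3;0;2;2;2;0;0]);
([::3;3;0;2;2;2;1;1;1],0,false,[::0;0]);
([::3;3;0;2;2;2;2;1;1],0,false,[::0;0]);
([::3;3;0;2;2;2;2;1;1],0,false,[::0]);
([::1;3;3;3],2,false,[::1;2;2;1]);
([::1;3;3],2,true,[::2;1;2;0]);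
([::3;3],2,true,[::1;2;2;1;1]);
([::3;3;3],2,true,[::1;2;2;2;1]);
([::3;3],2,true,[::1;2;2;2;1]);
([::1;2;2;1],0,true,[::2;1]);
([::1;2;2],0,true,[::2;1]);
([::0;0;0;3],2,true,[::0;2;2;2;1]);
([::0;0;0],2,true,[::0;2;2;2;1]);
([::0;0;0;3],2,true,[::0;2;2;2;1;1]);
([::3],2,true,[::3;0;0;0;0;2]);
([::3;0;0],2,true,[::0;0;2]);
([::1],0,false,[::2;2;0;0;0;2;2;0;2]);
([::2;2;0;0;0;3],2,false,[::2;2;0;2]);
([::2;2;0;0;0;3;3],2,false,[::2;0;2]);
([::1;1;3;3;3],2,false,[::1;3;3;3]);
([::1;1;2;2],0,true,[::1;2;0]);
([::1;1;1;2;2;2;1],0,true,[::2;0]);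
([::1],0,false,[::0;2;2;2;1;2;0]);
([::0;3;0;3],2,true,[::0;2;2;2]);
([::3;3;3;0;2;2;1;1;1;1],0,false,[::0;0;0;0]);
([::1;3;0;2;2;1;1;1;1],0,false,[::0]);
([::2;1;3;3;3],2,true,[::1;2;0]);
([::2;1;3;3],2,true,[::1;2;0]);
([::0;3;3;3;3],2,false,[::2;1;1;2]);
([::1;3;3;3],2,true,[::1;2;2;0;0;0;2;0;0]);
([::0;0;0;0],2,true,[::0;0;3]);
([::0;3],2,true,[::3;0;0;0;0;2]);
([::0;0;3;0;3;1;1;1],0,true,[::3]);
([::0;0;3;0;3;1;1],0,true,[::3]);
([::0;0;2;2;1;1;3;3;3],2,true,[::2;0]);
([::0],2,true,[::3;0;2;2;2;0;0]);
([::1;1],0,false,[::0;0;2;2;2;1;2;2]);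
([::0;0;2;2;2;1],0,true,[::1;2;2]);
([::1;1],0,false,[::0;0;2;2;2;0;0;2;0;2]);
([::0;0;2;2;1],0,true,[::2;0;0;2;0;2]);
([::0;0;2;2],0,true,[::2;0;0;2;0;2]);
([::1],0,false,[::0;2;2;2;2;0;0;3]);
([::0;0;0;2;1;3;3;3],2,true,[::1;2]);
([::0;0;0;2;1;3;3],2,true,[::1;2]);
([::0;0],2,true,[::0;3;1;1;1;3]);
([::1;1],0,false,[::0;0;2;2;2;2;0;0;0;2;0]);
([::1;1],0,false,[::0;2;2;2;2;0;0;0;2;0]);
([::3;3],2,true,[::1;3;3;3;1;1]);
([::1;3;3;1;1;1],0,false,[::3;1;1]);
([::1;1;3;3;1;1],0,true,[::3;1]);
([::3;3;3],2,true,[::2;0;0;0;2]);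
([::3;3],2,true,[::2;0;0;0;2]);
([::2;0;0;3;3;3],2,false,[::0;2]);
([::2;0;0;3;1;1;1],0,true,[::0;2]);
([::2;0;0;3;1;1],0,true,[::0;2]);
([::2;0;0;2;0;2;1;3],2,true,[::1;1]);
([::0;0;0;3;0;3;3;3],2,true,[::0;2;0;0;2;0;2]);
([::0;0;0;0;0;2;0;0;3;1;1;1;1],0,false,[::0;2]);
([::1;3;3;3;3],2,false,[::2;0;0;2;0;2;2;1]);
([::0;3],2,true,[::0;0;2;0;0;0;2;2]);
([::0],2,true,[::0;0;2;0;0;0;2;2]);
([::1;1],0,false,[::0;3;0;3;3;3;3;0;2;0;0;0;2]);
([::1;3;3;0;0;3;3;3],2,false,[::2;0]);
([::1;3;3;3;3],2,false,[::1;3;3;3;0;0;2;0]);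
([::3;3],2,true,[::1;1;3;1;1;1;1;1;3;1;2]);
([::3;3;1;3;3;3;1],0,true,[::3;1;1;3;1;2]);
([::3;3;1;3;1;1;3;1;2;1;1;3],2,true,[::1;1]);
([::1;3;3],2,true,[::1;3;3;3;1;3;1;1;3;1;2]);
([::3;1;1;1],0,false,[::3;3;1;3;3;1;1;3;1;2]);
([::3;1;1],0,true,[::3;3;1;3;3;1;1;3;1;2]);
([::0;2;2],0,true,[::2;0;0;3;1;1;3;1;2;0]);
([::0;2;2;2],0,true,[::2;0;0;3;1;1;3;1;2;0]);
([::1;1;3;3;1;3;1;1;3;1;2;0;0;3],2,true,[::]);
([::3;3],2,true,[::1;3;3;1;3;1;2;2;0]);
([::3],2,true,[::1;3;3;1;3;1;2;2;0]);
([::1;3;3;3],2,true,[::1;3;1;1;3;1;2;2;0;0;2;2;2;0]);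
([::1;3;3;3],2,false,[::1;3;3;1;1;3;1;2;2;2]);
([::1;1;3;3;3;3],2,false,[::1;3;3;1;1;3;1;2;2;2;0]);
([::1;1;3;3;3],2,true,[::1;3;3;1;1;3;1;2;2;2;0]);
([::0;0;0],2,true,[::3;1;1;3;3]);
([::2;2;1;3;3;3],2,true,[::1;2;2;1;3;1;1]);
([::2;2;0;0;3;3],2,false,[::0;2;2;1;3;1;1]);
([::1;3;1;1;3;3;1;1;3;3],2,false,[::]);
([::1;3;1;1;3;3;1;1;3],2,true,[::]);
([::3;1;1;1],0,true,[::1;3;1;1;3;3;0]);
([::3;1;1],0,true,[::1;3;1;1;3;3;0]);
([::2;1],0,true,[::2;2;2;1;3;1;1;3;3;0]);
([::1;3;1;1;3;3;1;1;1],0,true,[::0;3]);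
([::1;3;1;1;3;3;1;1],0,true,[::0;3]);
([::3;1;1;1],0,true,[::1;3;1;1;2;2;2;0]);
([::3;1;3;1;1;2;2;2;1],0,false,[::0]);
([::1;3;1;1;2;2;1;3;3;3],2,true,[::2;0]);
([::3],2,false,[::1;3;1;1;2;2;2;1;2;0]);
([::1;3;1;1],0,false,[::1;1;2;2;2;1;2;0]);
([::0;3;1;1;2;2;2;0;0;3],2,true,[::]);
([::0;2;2;1],0,true,[::2;0;0;3;0]);
([::0;0;0;2;2;1;1;3;3;3],2,true,[::2]);
([::1;1;3;1;1;1;3;3],2,true,[::1;2]);
([::3;1;1;1],0,true,[::1;3;1;1;2;2;1]);
([::1;3;1;1;2;1;3;3],2,true,[::2;1]);
([::3;1;1;1],0,true,[::1;3;1;1;2;2;1;1]);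
([::3;1;1;1],0,true,[::1;3;1;1;2;2;0]);
([::3;1;1;1],0,true,[::1;3;1;1;2;2]);
([::1;2;1],0,true,[::2;2;2;1;3;1;1;2;2;0;0]);
([::2;1],0,true,[::2;2;2;1;3;1;1;2;2;0]);
([::2],0,true,[::2;2;2;1;3;1;1;2;2;0]);
([::1;1;3;3;1;3;1;1;3;0;3;3],2,true,[::2]);
([::3],2,true,[::1;3;1;1;3;3;1;2]);
([::3],2,true,[::1;3;1;1;3;3;0;0;0;0;2]);
([::1;3;1;1;3;0;2;2;2;2;0;0;3],2,true,[::0]);
([::0;0;2;2;2;1],0,true,[::2;0;3;1;1;3;0;2;0;0]);
([::2;2;2;1;3;1;1;3;0;3;3;3],2,true,[::2;2;1]);
([::1;3;1;1;3;0;2;2;1;3;3;3],2,true,[::2;1]);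
([::1;3;1;1;3;0;2;2;1;3;3],2,true,[::2;1]);
([::1;1;1],0,false,[::1;3;1;1;3;3;0;0;0;2;2;2;0]);
([::1;3;1;1;3;0;2;2;1;3;3;3],2,true,[::2]);
([::0;0;0;2;2;2;1],0,true,[::1;1;3;0;0;2;0]);
([::1;3],2,true,[::1;3;1;1;2;2;0;0;2;2;0]);
([::1;1;3;1;1;2;2;0;0;3;3;3],2,true,[::2;2;0]);
([::1;1;1;3;1;1;2;2;1;1;1],0,true,[::0;0;2;2;0]);
([::1;1],0,true,[::1;3;1;1;2;2;0;0;2;2;2;0]);
([::1],0,true,[::1;3;1;1;2;2;0;0;2;2;2;0]);
([::1;3;1;1;2;2;0;0;3;3;3],2,true,[::2;2]);
([::1;3;1;1;2;2;0;0;3;3;3],2,true,[::2;2;1;1]);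
([::1;1;3;1;1;2;2;2;1;1;1],0,true,[::0;0;2;2;0]);
([::1;3;1;1;2;2;0;0;3;3;3],2,true,[::2;2;1;1;1]);
([::1;3;1;1;3;0;0;2;2;1;3;3;3;3],2,false,[::2;1]);
([::3;3;3],2,false,[::1;1;1;3;1;1;3;3;3;1]);
([::1;3;3;0;0;3],2,true,[::3;1]);
([::2;2;1;3;3;1;1;1],0,false,[::3;1;1;3;1]);
([::2;2;2;1;3;1;1;2;2;1],0,true,[::2;1]);
([::2;2;2;1;3;1;1;2;2],0,true,[::2;1]);
([::2;2;1],0,true,[::2;2;1;3;1;1;2;2;2;1]);
([::2;2],0,true,[::2;2;1;3;1;1;2;2;2;1]);
([::3],2,false,[::1;3;1;1;2;2;0;0;0;0;2;1]);
([::1;3;1;1;2;1],0,true,[::2;0;0;0;0;2;1]);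
([::1;3;1;1;2],0,true,[::2;0;0;0;0;2;1]);
([::0;0;3],2,true,[::3;1;1;3;3;3;1]);
([::1;3;3;1;1;2],0,true,[::2;0]);
([::1;1;2;2;1;1;3;3;3],2,true,[::2]);
([::3;3],2,false,[::0;2;2;0;0;3;0;2]);
([::3],2,true,[::0;2;2;0;0;3;0;2]);
([::0;2;2;0;0;0;3;3],2,true,[::2;1;1]);
([::2;1;3;3;3],2,true,[::1;3;3;3;1;1]);
([::1;2;0;0;3],2,true,[::0;2;2;0;0]);
([::1],0,false,[::1;2;0;0;0;0;0;2;2]);
([::1;2;1;1;3;3;3],2,true,[::1;2]);
([::1;2;1;1;3;3],2,true,[::1;2]);
([::3;1;1;1;1],0,false,[::3;3;0;0;0;2;0]);
([::3;3;3;3],2,false,[::1;3;3;3;0;0;0;2;0]);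
([::3;3],2,true,[::1;3;3;3;0;0;0;2;0]);
([::1;1],0,true,[::0;3;0;3;3;0;0;0;2;0]);
([::0;3;3;1;1;1],0,true,[::3;0;0;3;0;2;0]);
([::1;2;2;1],0,true,[::2;0;0;0;2;0;0]);
([::1;3;3;3],2,true,[::2;0;0;3;3;1;1]);
([::1;1;1;3;0;3],2,true,[::0;2;2;2]);
([::0;0;0;3;0;3],2,true,[::0;2;2;2]);
([::3;0;2;2;1],0,true,[::2;2;1;1]);
([::0;0;0;3;0;3],2,true,[::0;2;2;2;0]);
([::3;0;3],2,true,[::0;2;2;2;1;1;1]);
([::3;3;0;2;2;2;1;3;3;3],2,true,[::]);
([::3;3;0;2;2;2;1],0,true,[::2]);
([::3;3;0;2;2;2],0,true,[::2;1]);
([::1;3;3;3;1;2;1],0,true,[::2;1]);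
([::1;3;3;3;1;2],0,true,[::2;1]);
([::1;2;2;1],0,true,[::2;1;2;0]);
([::2;1],0,true,[::2;1;2;2;1;1]);
([::2;2;1],0,true,[::1;2;2;2;1]);
([::1;2;1],0,true,[::2;0;0;0;0;2;1]);
([::0;0;0;2;2;2;0;2;2;2;1;3;3;3],2,true,[::1]);
([::2;1],0,true,[::2;0;0;0;0;2]);
([::2],0,true,[::2;0;0;0;0;2]);
([::3;3],2,true,[::3;0;0;2;2;2;2;0;0;2]);
([::1;2;2;0;0;3;3],2,true,[::0;2;2;0;2]);
([::2;1],0,true,[::2;0;0;0;3;0;2]);
([::1;1;2;1],0,true,[::2;0;0;0;2;0]);
([::1;1;2],0,true,[::2;0;0;0;2;0]);
([::1;1;1;2;2],0,true,[::2;0;0;0;2;0]);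
([::3;3;3;1;1;1],0,true,[::0;2;2]);
([::],2,true,[::0;2;2;0;0;0;0;2]);
([::3],2,true,[::0;2;2;2;0;2;2;2;0;0]);
([::2;2;2;1],0,true,[::1;2;2]);
([::2;2;1],0,true,[::2;0;0;2;0;2]);
([::0;0;3;3;3],2,true,[::2;2;0;0;0;2;0;0;2;0;2]);
([::0;0;3;3;3],2,true,[::2;2;0;0;0;0;2;0;0;2;0;2]);
([::2;2;2;2;0;0;3],2,true,[::3]);
([::2;2;2;1],0,true,[::2;0;0;0;2;0]);
([::2;2;2],0,true,[::2;0;0;0;2;0]);
([::2;1;1],0,false,[::2;2;0;0;0;2]);
([::2;0;0;3;3;1;1;1],0,true,[::3;0;2]);
([::2;0;0;3;3;1],0,true,[::3;0;2]);
([::2;0;0],2,true,[::3;0;0;0;2]);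
([::2;0;0;3],2,true,[::2;0;2;1;2;2;2;1;1]);
([::0;0;0;3],2,true,[::3;0;2;0;2;0;0;2;0;2]);
([::0;0;2;2],0,true,[::2;0;0;0;2;0;3;1;1;3;0;2;0;0]);
([::0;0;0;2;2],0,true,[::2;0;3;0;0;2;0]);
([::0;3],2,false,[::0;2;2;1;1;3;3;3;1]);
([::2;1;1],0,true,[::2;2;0;2;2;0;0;3;0;2]);
([::1;1;2;0;0;0;0],2,true,[::0;2;2]);
([::1;2;1;1;2;2],0,true,[::1;2]);
([::3;1;1;1;1;3;3;0;3],2,true,[::0;0;2;0]);
([::3;1;1;1;1;3;3;0],2,true,[::0;0;2;0]);
([::0;3;3;0;3],2,true,[::3;0;0;3;0;2;0]);
([::0;3;3;0],2,true,[::3;0;0;3;0;2;0]);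
([::0;0;0],2,true,[::3;0;2;2;2;0;2;2;2;0]);
([::1;1],0,true,[::3;3;0;2;2;2;0;0;0;2]);
([::],0,true,[::1;2;0;0;0;2;0;0;0;0;2;1]);
([::0;0;3],2,true,[::0;2;2;2;0;2;2;2;1;2;1]);
([::2;1;1],0,true,[::0;0;0;2;0;0;0;0;2]);
([::1;1],0,true,[::2;0;0;0;0;2;0;0;0;0;2]);
([::],0,true,[::2;0;0;0;0;2;0;0;0;0;2]);
([::1],0,true,[::2;0;0;2;2;2;2;0;0;2]);
([::2;0;0;2;2;2;2;1;1;1],0,true,[::0;0;2]);
([::1;1],0,false,[::2;2;2;0;2;2;2;0;2;2;2;0;0]);
([::1;1;1],0,true,[::0;0;2;2;2;0;0;0;2;0;0;2;0;2]);
([::1;1;1],0,true,[::2;2;2;0;0;0;0;2;0;0;0;2;0]);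
([::1],0,true,[::2;2;2;0;0;0;0;2;0;0;0;2;0])]%N.

Lemma check_U_to_V : check_cert words_U steps_U words_V.
Proof. by vm_compute. Qed.
Lemma check_Urhs_to_V : check_cert words_Urhs steps_Urhs words_V.
Proof. by vm_compute. Qed.
Lemma check_V_stable : check_cert words_V steps_V (right_multiples words_V).
Proof. by vm_compute. Qed.

Section WordMembership.
Variables (R : comUnitRingType) (A : unitAlgType R) (s1 s2 : A).
Hypotheses (s1_unit : s1 \is a GRing.unit) (s2_unit : s2 \is a GRing.unit).
Local Open Scope ring_scope.
Local Notation ev := (eval_word s1 s2).

Lemma u1u2u1_wordsP (P : A -> Prop) js :
  (forall i j k, P (s1 ^+ i * s2 ^+ j * s1 ^+ k)) ->
  forall w, w \in u1u2u1_words js -> P (ev w).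
Proof.
move=> Pijk w /allpairsP [[i w']] [_ /allpairsP [[j k]] [_ _ ->] ->] /=.
by rewrite !eval_word_cat !eval_word_nseq mulrA.
Qed.

Lemma u1_m_u1_wordsP (P : A -> Prop) m :
  (forall i k, P (s1 ^+ i * ev m * s1 ^+ k)) ->
  forall w, w \in u1_m_u1_words m -> P (ev w).
Proof.
move=> Pik w /allpairsP [[i k] [_ _ ->]] /=.
by rewrite !eval_word_cat !eval_word_nseq mulrA.
Qed.

Lemma u1_m_wordsP (P : A -> Prop) m :
  (forall i, P (s1 ^+ i * ev m)) -> forall w, w \in u1_m_words m -> P (ev w).
Proof. by move=> Pi w /mapP [i _ ->]; rewrite eval_word_cat eval_word_nseq. Qed.

Lemma u1u2u1_mem i j k :
  smul (smul (u1 s1) (u2 s2)) (u1 s1) (s1 ^+ i * s2 ^+ j * s1 ^+ k).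
Proof. by apply: smul_in; [apply: smul_in|]; apply: subalg_exp. Qed.

Lemma u1_m_mem m i : smul (u1 s1) (elt m) (s1 ^+ i * m).
Proof. by apply: smul_in; [apply: subalg_exp | apply: Defs.span_in]. Qed.

Lemma u1_m_u1_mem m i k :
  smul (smul (u1 s1) (elt m)) (u1 s1) (s1 ^+ i * m * s1 ^+ k).
Proof. by apply: smul_in; [apply: u1_m_mem | apply: subalg_exp]. Qed.

Lemma eval_s2_s1inv_s2 : ev [:: 2; 1; 2]%N = s2 * s1^-1 * s2.
Proof. by rewrite /eval_word /= mul1r. Qed.

Lemma eval_s2inv_s1_s2inv : ev [:: 3; 0; 3]%N = s2^-1 * s1 * s2^-1.
Proof. by rewrite /eval_word /= mul1r. Qed.

Lemma eval_s2inv_s1inv2_s2inv : ev [:: 3; 1; 1; 3]%N = s2^-1 * s1 ^- 2 * s2^-1.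
Proof. by rewrite /eval_word /= mul1r -exprVn expr2 !mulrA. Qed.

Lemma eval_s2_s1inv2_s2 : ev [:: 2; 1; 1; 2]%N = s2 * s1 ^- 2 * s2.
Proof. by rewrite /eval_word /= mul1r -exprVn expr2 !mulrA. Qed.

Lemma eval_s2inv2_s1inv2_s2inv2 :
  ev [:: 3; 3; 1; 1; 3; 3]%N = s2 ^- 2 * s1 ^- 2 * s2 ^- 2.
Proof. by rewrite /eval_word /= mul1r -!exprVn !expr2 !mulrA. Qed.

Lemma eval_omega : ev [:: 2; 0; 0; 2]%N = omega s1 s2.
Proof. by rewrite /eval_word /= mul1r /omega expr2 !mulrA. Qed.

Lemma eval_omega_inv : ev [:: 3; 1; 1; 3]%N = (omega s1 s2)^-1.
Proof.
rewrite eval_s2inv_s1inv2_s2inv /omega [RHS]invrM ?unitrMl ?unitrX //.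
by rewrite [(s2 * s1 ^+ 2)^-1]invrM ?unitrX // mulrA.
Qed.

Lemma eval_omega_inv2 : ev [:: 3; 1; 1; 3; 3; 1; 1; 3]%N = (omega s1 s2) ^- 2.
Proof.
by rewrite -exprVn expr2 -eval_omega_inv -eval_word_cat.
Qed.

Lemma words_U_in w : w \in words_U -> U s1 s2 (ev w).
Proof.
rewrite /words_U (mem_cat _ (u1u2u1_words _))
  (mem_cat _ (u1_m_u1_words [:: 2; 1; 2]%N))
  (mem_cat _ (u1_m_u1_words [:: 3; 0; 3]%N)) (mem_cat _ (u1_m_words [:: 3; 1; 1; 3]%N))
  (mem_cat _ (u1_m_u1_words [:: 2; 1; 1; 2]%N)).
case/orP => [w_in|/orP [w_in|/orP [w_in|/orP [w_in|/orP [w_in|w_in]]]]].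
- apply: u1u2u1_wordsP w_in => i j k.
  do 5 apply: sadd_inl; exact: u1u2u1_mem.
- apply: u1_m_u1_wordsP w_in => i k; rewrite eval_s2_s1inv_s2.
  do 4 apply: sadd_inl; apply: sadd_inr; exact: u1_m_u1_mem.
- apply: u1_m_u1_wordsP w_in => i k; rewrite eval_s2inv_s1_s2inv.
  do 3 apply: sadd_inl; apply: sadd_inr; exact: u1_m_u1_mem.
- apply: u1_m_wordsP w_in => i; rewrite eval_s2inv_s1inv2_s2inv.
  do 2 apply: sadd_inl; apply: sadd_inr; exact: u1_m_mem.
- apply: u1_m_u1_wordsP w_in => i k; rewrite eval_s2_s1inv2_s2.
  apply: sadd_inl; apply: sadd_inr; exact: u1_m_u1_mem.
- apply: u1_m_u1_wordsP w_in => i k; rewrite eval_s2inv2_s1inv2_s2inv2.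
  apply: sadd_inr; exact: u1_m_u1_mem.
Qed.

Lemma words_Urhs_in w : w \in words_Urhs -> U_rhs s1 s2 (ev w).
Proof.
rewrite /words_Urhs (mem_cat _ (u1u2u1_words _))
  (mem_cat _ (u1_m_u1_words [:: 2; 1; 2]%N))
  (mem_cat _ (u1_m_u1_words [:: 3; 0; 3]%N))
  (mem_cat _ (u1_m_words [:: 2; 0; 0; 2]%N))
  (mem_cat _ (u1_m_words [:: 3; 1; 1; 3]%N)).
case/orP => [w_in|/orP [w_in|/orP [w_in|/orP [w_in|/orP [w_in|w_in]]]]].
- apply: u1u2u1_wordsP w_in => i j k.
  do 5 apply: sadd_inl; exact: u1u2u1_mem.
- apply: u1_m_u1_wordsP w_in => i k; rewrite eval_s2_s1inv_s2.
  do 4 apply: sadd_inl; apply: sadd_inr; exact: u1_m_u1_mem.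
- apply: u1_m_u1_wordsP w_in => i k; rewrite eval_s2inv_s1_s2inv.
  do 3 apply: sadd_inl; apply: sadd_inr; exact: u1_m_u1_mem.
- apply: u1_m_wordsP w_in => i; rewrite eval_omega.
  do 2 apply: sadd_inl; apply: sadd_inr; exact: u1_m_mem.
- apply: u1_m_wordsP w_in => i; rewrite eval_omega_inv.
  apply: sadd_inl; apply: sadd_inr; exact: u1_m_mem.
- apply: u1_m_wordsP w_in => i; rewrite eval_omega_inv2.
  apply: sadd_inr; exact: u1_m_mem.
Qed.

End WordMembership.

Section Spanning.
Variables (R : comUnitRingType) (A : unitAlgType R) (a b c d : R) (s1 s2 : A).
Hypothesis rels : H4_rels a b c d s1 s2.
Local Open Scope ring_scope.
Local Notation ev := (eval_word s1 s2).

Definition words_V_span : A -> Prop :=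
  Defs.span (fun x => exists2 w, w \in words_V & x = ev w).

Lemma generator_letter g : g \in [:: s1; s2; s1^-1; s2^-1] ->
  exists2 l, (l < 4)%N & g = letter s1 s2 l.
Proof.
by rewrite !inE => /or4P [] /eqP ->;
  [exists 0%N | exists 2%N | exists 1%N | exists 3%N].
Qed.

Lemma words_V_span_subalg x : subalg [:: s1; s2; s1^-1; s2^-1] x -> words_V_span x.
Proof.
apply: subalg_span; first by apply: Defs.span_in; exists [::].
move=> _ g [w w_in ->] /generator_letter [l l_lt4 ->].
rewrite /words_V_span -eval_word_rcons.
apply: (check_cert_in_span rels _ check_V_stable).
  by move=> v v_in; apply: Defs.span_in; exists v.
by apply/allpairsP; exists (w, l); rewrite mem_iota.
Qed.

Lemma span_words_V_total (Q : A -> Prop) :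
  (forall x, subalg [:: s1; s2; s1^-1; s2^-1] x) ->
  (forall w, w \in words_V -> Defs.span Q (ev w)) -> forall x, Defs.span Q x.
Proof.
move=> gen V_in x; apply: span_sub (words_V_span_subalg (gen x)) => _ [w w_in ->].
exact: V_in.
Qed.

End Spanning.

Local Open Scope ring_scope.

Theorem theorem3p3 (R : comUnitRingType) (A : unitAlgType R)
    (a b c d : R) (s1 s2 : A) :
  H4_rels a b c d s1 s2 ->
  (* A is generated as an R-algebra by s1^{±1}, s2^{±1} (as H_4 is) *)
  (forall x : A, subalg [:: s1; s2; s1^-1; s2^-1] x) ->
  seteq (U s1 s2) (U_rhs s1 s2) /\ (forall x : A, U s1 s2 x).
Proof.
move=> rels gen.
have [[_ s1_unit s2_unit] _] := rels.
have U_total : forall x, U s1 s2 x.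
  apply: (span_words_V_total rels gen) => w.
  exact: (check_cert_in_span rels (words_U_in s1 s2) check_U_to_V).
have Urhs_total : forall x, U_rhs s1 s2 x.
  apply: (span_words_V_total rels gen) => w.
  exact: (check_cert_in_span rels (words_Urhs_in s1_unit s2_unit) check_Urhs_to_V).
by split=> // x; split.
Qed.
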